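(* In the setting of problem (CP1) and the prox-ADC method described in the context, suppose Assumptions 1–6 hold and let $\{x^k\}$ be generated by the method. (a) If a subsequence $\{x^{k+1}\}_{k\in N}$ ($N\subset\mathbb{N}$ infinite) converges to some $\bar x$ and $\partial^\infty_Af_p(\bar x)=\{0\}$ for $p\in I_2$, then $\{Y^k(x^{k+1})\}_{k\in N}$ is equi-bounded (all contained in one bounded set). (b) If $\{x^k\}$ is bounded and $\partial_A^\infty f_p(x)=\{0\}$ for every $x\in\bigcap_{p=1}^m\operatorname{dom}F_p$ and every $p\in I_2$, then $\{Y^k(x^{k+1})\}$ is equi-bounded, i.e. $D:=\sup_{k\in\mathbb{N}}\sup_{y\in Y^k(x^{k+1})}\|y\|<+\infty$.
   Context: Problem (CP1): integers $0\le m_1\le m$; $f_p:\mathbb{R}^n\to\mathbb{R}$; $\varphi_p:\mathbb{R}\to\mathbb{R}$ convex for $p\le m_1$; $\varphi_p=\delta_{(-\infty,0]}$ for $p>m_1$; $F_p=\varphi_p\circ f_p$. $I_1=\{p:\varphi_p$ nondecreasing$\}$, $I_2$ its complement. Monotonic decomposition $\varphi_p=\varphi^\uparrow_p+\varphi^\downarrow_p$: $(\varphi_p,0)$ if nondecreasing; $(0,\varphi_p)$ if nonincreasing; otherwise with minimizer $z^*$, $\varphi_p^\uparrow=\varphi_p(z^* )$ on $z\le z^*$, $\varphi_p$ on $z>z^*$; $\varphi^\downarrow_p=\varphi_p-\varphi_p(z^* )$ on $z\le z^*$, $0$ on $z>z^*$. Assumption 1: $f_p^k=g_p^k-h_p^k$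 ($g_p^k,h_p^k:\mathbb{R}^n\to\mathbb{R}$ convex), $f_p^k$ epi-converges to $f_p$; $-\infty<\liminf_{x'\to x,k\to\infty}f_p^k(x')\le\limsup_{x'\to x,k\to\infty}f_p^k(x')<\infty$ $\forall x$; $\varphi_p\circ f_p^k$ epi-converges to $\varphi_p\circ f_p$. Assumption 2: $X^k=\{x:f_p^k(x)\le0,p>m_1\}$, $\alpha_p^k=\sup_{X^k}[f_p^{k+1}-f^k_p]_+$; there are $x^0$, nonnegative $\widehat\alpha_p^k\ge\alpha_p^k$ ($p>m_1$) with $\sum_{k'}\widehat\alpha_p^{k'}<\infty$, $f_p^0(x^0)\le-\sum_{k'}\widehat\alpha_p^{k'}$; $\widehat\alpha_p^k=0$ for $p\le m_1$. Assumption 3: $\exists\ell_k>0$: $\min\{\mathbb H(\partial g_p^k(x),\partial g_p^k(x')),\mathbb H(\partial h_p^k(x),\partial h_p^k(x'))\}\le\ell_k\|x-x'\|$ $\forall x,x',p$. Assumption 4: each $\sum_{p\le m_1}\varphi_p(f^k_p)+\sum_{p>m_1}\delta_{(-\infty,0]}(f^k_p)$ is level-bounded. Assumption 5: for every $\bar x\in\bigcap_p\operatorname{dom}F_p$, if $0=\sum_py_pv_p$ with $(y_p,v_p)\in(\bigcup\{\mathcal N_{\operatorname{dom}\varphi_p}(t):t\in T_p(\bar x)\}\times\operatorname{con}\partial_Af_p(\bar x))\cup(\mathbb{R}\times[\partial_A^\infty f_p(\bar x)\setminus\{0\}])$ for each $p$, then all $y_p=0$; here $T_p(x)=\{t:\exists$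 infinite $N$, $x^k\to x$, $f^k_p(x^k)\to_Nt\}$, $\partial_Af_p(\bar x)=\bigcup_{x^k\to\bar x}\operatorname{Lim\,sup}_k[\partial g_p^k(x^k)-\partial h_p^k(x^k)]$, $\partial^\infty_Af_p(\bar x)=\bigcup_{x^k\to\bar x}\operatorname{Lim\,sup}^\infty_k[\partial g_p^k(x^k)-\partial h_p^k(x^k)]$ (outer limit $\{u:\exists$ infinite $N$, $u^k\in C^k$, $u^k\to_Nu\}$; horizon outer limit $\{0\}\cup\{u:\exists$ infinite $N,\lambda_k\downarrow0,u^k\in C^k,\lambda_ku^k\to_Nu\}$). Method: $\lambda>0$, positive $\epsilon_k\downarrow0,\delta_k\downarrow0$ with $\delta_k/(\lambda+\ell_k)\downarrow0$, $\sigma^k_p=\sum_{k'\ge k}\widehat\alpha^{k'}_p$; at $y$ pick $a_p\in\partial h^k_p(y)$, $b_p\in\partial g^k_p(y)$; $f^{k,\mathrm{up}}_p(x;y)=g^k_p(x)-h_p^k(y)-a_p^\top(x-y)+\sigma_p^k$; $f_p^{k,\mathrm{lo}}(x;y)=g_p^k(y)+b_p^\top(x-y)-h_p^k(x)$; $\widehat F_p^k(x;y)=\varphi_p^\uparrow(f^{k,\mathrm{up}}_p(x;y))+\varphi_p^\downarrow(f^{k,\mathrm{lo}}_p(x;y))$. Subproblem at $y$: $\operatorname{argmin}\{\sum_{p\le m_1}\widehat F^k_p(x;y)+\frac\lambda2\|x-y\|^2:f^{k,\mathrm{up}}_p(x;y)\le0,p>m_1\}$. Iterates: $x^{k,0}=x^k$,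 $x^{k,i+1}$ = subproblem solution at $y=x^{k,i}$; $i_k$ first $i$ with $f_p^{k,\mathrm{up}}(x^{k,i+1};x^{k,i})\le f_p^k(x^{k,i+1})+\sigma_p^k+\epsilon_k$ $\forall p$, $f_p^{k,\mathrm{lo}}(x^{k,i+1};x^{k,i})\ge f_p^k(x^{k,i+1})-\epsilon_k$ for $p\in I_2$, $\|x^{k,i+1}-x^{k,i}\|\le\delta_k/(\lambda+\ell_k)$; $x^{k+1}=x^{k,i_k}$. Assumption 6: for all $k$ and every pair $(x',x'')$ with $x''$ the subproblem solution at $y=x'$, if $y_p\in\mathcal N_{(-\infty,0]}(f^{k,\mathrm{up}}_p(x'';x'))$ ($p>m_1$) satisfy $0\in\sum_{p>m_1}y_p\partial f_p^{k,\mathrm{up}}(x'';x')$, then all these $y_p=0$. $Y^k(x^{k+1})$: set of $(y_{1,1},y_{1,2},\dots,y_{m,1},y_{m,2})$ with $0\in\sum_p[y_{p,1}\partial f^{k,\mathrm{up}}_p(x^{k,i_k+1};x^{k,i_k})+y_{p,2}\partial f_p^{k,\mathrm{lo}}(x^{k,i_k+1};x^{k,i_k})]+\lambda(x^{k,i_k+1}-x^{k,i_k})$, $y_{p,1}\in\partial\varphi_p^\uparrow(f_p^{k,\mathrm{up}}(x^{k,i_k+1};x^{k,i_k}))$, $y_{p,2}\in\partial\varphi_p^\downarrow(f_p^{k,\mathrm{lo}}(x^{k,i_k+1};x^{k,i_k}))$. *)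

From HB Require Import structures.
From mathcomp Require Import all_boot all_order all_algebra.
From mathcomp Require Import boolp classical_sets reals constructive_ereal.

Set Implicit Arguments.
Unset Strict Implicit.
Unset Printing Implicit Defensive.

Import Order.TTheory GRing.Theory Num.Theory.
Local Open Scope ring_scope.
Local Open Scope classical_set_scope.

Section Generic.
Context {R : realType} {n : nat}.
Local Notation vec := 'rV[R]_n.

Definition dot (u v : vec) : R := \sum_(i < n) u 0 i * v 0 i.
Definition vnorm (v : vec) : R := Num.sqrt (dot v v).

Definition convex_fun (g : vec -> R) : Prop :=
  forall (x y : vec) (t : R), 0 <= t <= 1 ->
    g (t *: x + (1 - t) *: y) <= t * g x + (1 - t) * g y.

Definition csubdiff (g : vec -> R) (x : vec) : set vec :=
  [set v | forall z, g x + dot v (z - x) <= g z].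

Definition supdiff (g : vec -> R) (x : vec) : set vec :=
  [set v | csubdiff (fun z => - g z) x (- v)].

Definition vcvg (xs : nat -> vec) (x : vec) : Prop :=
  forall e : R, 0 < e -> exists K, forall k, (K <= k)%N -> vnorm (xs k - x) < e.

Definition bounded_set (A : set vec) : Prop :=
  exists M : R, forall x, A x -> vnorm x <= M.

Definition hausdorff_le (A B : set vec) (c : R) : Prop :=
  (forall a, A a -> forall e : R, 0 < e -> exists b, B b /\ vnorm (a - b) < c + e) /\
  (forall b, B b -> forall e : R, 0 < e -> exists a, A a /\ vnorm (b - a) < c + e).

Definition conv_hull (A : set vec) : set vec :=
  [set v | exists (q : nat) (w : 'I_q -> R) (a : 'I_q -> vec),
      (forall i, A (a i)) /\ (forall i, 0 <= w i) /\ \sum_(i < q) w i = 1 /\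
      v = \sum_(i < q) w i *: a i].

Definition msub (A B : set vec) : set vec :=
  [set v | exists a b, A a /\ B b /\ v = a - b].

Definition level_bounded (F : vec -> \bar R) : Prop :=
  forall a : R, bounded_set [set x | (F x <= a%:E)%E].

Definition epi_cvg (Fk : nat -> vec -> \bar R) (F : vec -> \bar R) : Prop :=
  forall x,
    (forall xs, vcvg xs x -> forall a : R, (a%:E < F x)%E ->
        exists K, forall k, (K <= k)%N -> (a%:E < Fk k (xs k))%E) /\
    (exists xs, vcvg xs x /\ forall a : R, (F x < a%:E)%E ->
        exists K, forall k, (K <= k)%N -> (Fk k (xs k) < a%:E)%E).

End Generic.

Section Scalar.
Context {R : realType}.

Definition rcvg (u : nat -> R) (l : R) : Prop :=
  forall e : R, 0 < e -> exists K, forall k, (K <= k)%N -> `|u k - l| < e.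

(* an infinite index set N, given as a strictly increasing enumeration *)
Definition subseq_idx (s : nat -> nat) : Prop := forall j, (s j < s j.+1)%N.

Definition convex_rfun (phi : R -> R) : Prop :=
  forall (x y t : R), 0 <= t <= 1 ->
    phi (t * x + (1 - t) * y) <= t * phi x + (1 - t) * phi y.

Definition enondecr (psi : R -> \bar R) : Prop :=
  forall s t, s <= t -> (psi s <= psi t)%E.
Definition enonincr (psi : R -> \bar R) : Prop :=
  forall s t, s <= t -> (psi t <= psi s)%E.

(* monotonic decomposition psi = psi_up + psi_down (see context) *)
Definition minimizer (psi : R -> \bar R) : R :=
  xget 0 [set z | forall s, (psi z <= psi s)%E].

Definition phi_up (psi : R -> \bar R) : R -> \bar R := fun z =>
  if pselect (enondecr psi) then psi z
  else if pselect (enonincr psi) then 0%E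
  else if z <= minimizer psi then psi (minimizer psi) else psi z.

Definition phi_down (psi : R -> \bar R) : R -> \bar R := fun z =>
  if pselect (enondecr psi) then 0%E
  else if pselect (enonincr psi) then psi z
  else if z <= minimizer psi then (psi z - psi (minimizer psi))%E else 0%E.

Definition esubdiff (psi : R -> \bar R) (t : R) : set R :=
  [set y | psi t \is a fin_num /\ forall s, (psi t + (y * (s - t))%:E <= psi s)%E].

Definition edom (psi : R -> \bar R) : set R := [set z | (psi z < +oo)%E].

(* normal cone of a convex set C of R at t (empty if t is not in C) *)
Definition ncone (C : set R) (t : R) : set R :=
  [set y | C t /\ forall s, C s -> y * (s - t) <= 0].

End Scalar.

Section Limits.
Context {R : realType} {n : nat}.
Local Notation vec := 'rV[R]_n.

Definition outer_limit (C : nat -> set vec) : set vec :=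
  [set u | exists s, subseq_idx s /\
     exists us : nat -> vec, (forall j, C (s j) (us j)) /\ vcvg us u].

Definition horizon_outer_limit (C : nat -> set vec) : set vec :=
  [set u | u = 0 \/
     exists s, subseq_idx s /\
     exists lam : nat -> R, (forall k, 0 < lam k) /\ (forall k, lam k.+1 <= lam k) /\
       rcvg lam 0 /\
     exists us : nat -> vec, (forall j, C (s j) (us j)) /\
       vcvg (fun j => lam (s j) *: us j) u].
End Limits.

(* Problem (CP1) data.  Indices p : 'I_m are 0-based: the paper's p <= m1   *)
(* corresponds to (p < m1)%N.                                              *)
Unset Implicit Arguments.

Record cp1 (R : realType) (n : nat) := CP1 {
  cp_m : nat;
  cp_m1 : nat;
  cp_f : 'I_cp_m -> 'rV[R]_n -> R;
  cp_phi : 'I_cp_m -> R -> R;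
  cp_g : nat -> 'I_cp_m -> 'rV[R]_n -> R;
  cp_h : nat -> 'I_cp_m -> 'rV[R]_n -> R
}.
Arguments cp_m {R n} c.
Arguments cp_m1 {R n} c.
Arguments cp_f {R n} c _ _.
Arguments cp_phi {R n} c _ _.
Arguments cp_g {R n} c _ _ _.
Arguments cp_h {R n} c _ _ _.

Section Problem.
Context {R : realType} {n : nat} (P : cp1 R n).
Local Notation vec := 'rV[R]_n.
Local Notation m := (cp_m P).
Local Notation m1 := (cp_m1 P).

Definition is_obj (p : 'I_m) : bool := (p < m1)%N.

Definition Phi (p : 'I_m) : R -> \bar R := fun z =>
  if is_obj p then (cp_phi P p z)%:E else (if z <= 0 then 0%E else +oo%E).

Definition Fp (p : 'I_m) (x : vec) : \bar R := Phi p (cp_f P p x).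

Definition fk (k : nat) (p : 'I_m) (x : vec) : R := cp_g P k p x - cp_h P k p x.

Definition I1 (p : 'I_m) : Prop := enondecr (Phi p).
Definition I2 (p : 'I_m) : Prop := ~ I1 p.

Definition dom_all (x : vec) : Prop := forall p, (Fp p x < +oo)%E.

Definition Tset (p : 'I_m) (x : vec) : set R :=
  [set t | exists s, subseq_idx s /\ exists xs : nat -> vec, vcvg xs x /\
      rcvg (fun j => fk (s j) p (xs (s j))) t].

Definition dC (p : 'I_m) (xs : nat -> vec) (k : nat) : set vec :=
  msub (csubdiff (cp_g P k p) (xs k)) (csubdiff (cp_h P k p) (xs k)).

Definition dA (p : 'I_m) (xbar : vec) : set vec :=
  [set u | exists xs, vcvg xs xbar /\ outer_limit (dC p xs) u].

Definition dAinf (p : 'I_m) (xbar : vec) : set vec :=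
  [set u | exists xs, vcvg xs xbar /\ horizon_outer_limit (dC p xs) u].

Definition Assumption1 : Prop :=
  (forall k p, convex_fun (cp_g P k p) /\ convex_fun (cp_h P k p)) /\
  (forall p, epi_cvg (fun k x => (fk k p x)%:E) (fun x => (cp_f P p x)%:E)) /\
  (forall p (x : vec),
     (exists (d c : R) (K : nat), 0 < d /\
        forall k x', (K <= k)%N -> vnorm (x' - x) < d -> c <= fk k p x') /\
     (exists (d c : R) (K : nat), 0 < d /\
        forall k x', (K <= k)%N -> vnorm (x' - x) < d -> fk k p x' <= c)) /\
  (forall p, epi_cvg (fun k x => Phi p (fk k p x)) (Fp p)).

Definition Xk (k : nat) : set vec := [set x | forall p, ~~ is_obj p -> fk k p x <= 0].

Definition Assumption2 (x0 : vec) (ahat : 'I_m -> nat -> R) : Prop :=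
  (forall p k, is_obj p -> ahat p k = 0) /\
  (forall p, ~~ is_obj p ->
     (forall k, 0 <= ahat p k) /\
     (forall k x, Xk k x -> Num.max 0 (fk k.+1 p x - fk k p x) <= ahat p k) /\
     exists S : R, rcvg (fun N => \sum_(0 <= k' < N) ahat p k') S /\ fk 0 p x0 <= - S).

Definition Assumption3 (ell : nat -> R) : Prop :=
  (forall k, 0 < ell k) /\
  forall k (x x' : vec) p,
    hausdorff_le (csubdiff (cp_g P k p) x) (csubdiff (cp_g P k p) x') (ell k * vnorm (x - x')) \/
    hausdorff_le (csubdiff (cp_h P k p) x) (csubdiff (cp_h P k p) x') (ell k * vnorm (x - x')).

Definition Assumption4 : Prop :=
  forall k, level_bounded (fun x => (\sum_(p < m) Phi p (fk k p x))%E).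

Definition Assumption5 : Prop :=
  forall xbar, dom_all xbar ->
  forall (y : 'I_m -> R) (v : 'I_m -> vec),
    (forall p,
       ((exists t, Tset p xbar t /\ ncone (edom (Phi p)) t (y p)) /\
          conv_hull (dA p xbar) (v p)) \/
       (dAinf p xbar (v p) /\ v p <> 0)) ->
    \sum_(p < m) y p *: v p = 0 -> forall p, y p = 0.

Definition fup (sigma : 'I_m -> nat -> R) (k : nat) (p : 'I_m) (a y x : vec) : R :=
  cp_g P k p x - cp_h P k p y - dot a (x - y) + sigma p k.

Definition flo (k : nat) (p : 'I_m) (b y x : vec) : R :=
  cp_g P k p y + dot b (x - y) - cp_h P k p x.

Definition valid_picks (k : nat) (a b : 'I_m -> vec) (y : vec) : Prop :=
  forall p, csubdiff (cp_h P k p) y (a p) /\ csubdiff (cp_g P k p) y (b p).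

Definition sub_obj sigma (lam : R) k (a b : 'I_m -> vec) (y x : vec) : \bar R :=
  ((\sum_(p < m | is_obj p)
      (phi_up (Phi p) (fup sigma k p (a p) y x) + phi_down (Phi p) (flo k p (b p) y x)))
   + (lam / 2 * vnorm (x - y) ^+ 2)%:E)%E.

Definition sub_feas sigma k (a : 'I_m -> vec) (y x : vec) : Prop :=
  forall p, ~~ is_obj p -> fup sigma k p (a p) y x <= 0.

Definition sub_sol sigma lam k (a b : 'I_m -> vec) (y x'' : vec) : Prop :=
  sub_feas sigma k a y x'' /\
  forall x, sub_feas sigma k a y x -> (sub_obj sigma lam k a b y x'' <= sub_obj sigma lam k a b y x)%E.

Definition Assumption6 sigma lam : Prop :=
  forall k (x' x'' : vec) (a b : 'I_m -> vec),
    valid_picks k a b x' -> sub_sol sigma lam k a b x' x'' ->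
    forall y : 'I_m -> R,
      (forall p, ~~ is_obj p -> ncone [set t | t <= 0] (fup sigma k p (a p) x' x'') (y p)) ->
      (exists w : 'I_m -> vec,
         (forall p, ~~ is_obj p -> csubdiff (fun x => fup sigma k p (a p) x' x) x'' (w p)) /\
         \sum_(p < m | ~~ is_obj p) y p *: w p = 0) ->
      forall p, ~~ is_obj p -> y p = 0.

End Problem.

Record adc_run (R : realType) (n : nat) (m : nat) := ADCRun {
  r_lam : R;
  r_eps : nat -> R;
  r_del : nat -> R;
  r_ell : nat -> R;
  r_ahat : 'I_m -> nat -> R;
  r_sigma : 'I_m -> nat -> R;
  r_X : nat -> 'rV[R]_n;
  r_xi : nat -> nat -> 'rV[R]_n;
  r_ik : nat -> nat;
  r_a : nat -> nat -> 'I_m -> 'rV[R]_n;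
  r_b : nat -> nat -> 'I_m -> 'rV[R]_n
}.
Arguments r_lam {R n m} a.
Arguments r_eps {R n m} a.
Arguments r_del {R n m} a.
Arguments r_ell {R n m} a.
Arguments r_ahat {R n m} a.
Arguments r_sigma {R n m} a.
Arguments r_X {R n m} a.
Arguments r_xi {R n m} a.
Arguments r_ik {R n m} a.
Arguments r_a {R n m} a.
Arguments r_b {R n m} a.

Section Method.
Context {R : realType} {n : nat} (P : cp1 R n) (M : adc_run R n (cp_m P)).
Local Notation vec := 'rV[R]_n.
Local Notation m := (cp_m P).

Definition method_params : Prop :=
  0 < r_lam M /\
  (forall k, 0 < r_eps M k /\ r_eps M k.+1 <= r_eps M k) /\ rcvg (r_eps M) 0 /\
  (forall k, 0 < r_del M k /\ r_del M k.+1 <= r_del M k) /\ rcvg (r_del M) 0 /\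
  (forall k, r_del M k.+1 / (r_lam M + r_ell M k.+1) <= r_del M k / (r_lam M + r_ell M k)) /\
  rcvg (fun k => r_del M k / (r_lam M + r_ell M k)) 0.

Definition sigma_def : Prop :=
  forall p k, rcvg (fun N => \sum_(k <= k' < N) r_ahat M p k') (r_sigma M p k).

Definition crit (k i : nat) : Prop :=
  let y := r_xi M k i in let x := r_xi M k i.+1 in
  (forall p, fup P (r_sigma M) k p (r_a M k i p) y x <= fk P k p x + r_sigma M p k + r_eps M k) /\
  (forall p, I2 P p -> fk P k p x - r_eps M k <= flo P k p (r_b M k i p) y x) /\
  vnorm (x - y) <= r_del M k / (r_lam M + r_ell M k).

Definition generated : Prop :=
  (forall k, r_xi M k 0 = r_X M k) /\
  (forall k, r_X M k.+1 = r_xi M k (r_ik M k)) /\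
  (forall k i, (i <= r_ik M k)%N ->
     valid_picks P k (r_a M k i) (r_b M k i) (r_xi M k i) /\
     sub_sol P (r_sigma M) (r_lam M) k (r_a M k i) (r_b M k i) (r_xi M k i) (r_xi M k i.+1)) /\
  (forall k, crit k (r_ik M k)) /\
  (forall k i, (i < r_ik M k)%N -> ~ crit k i).

(* Y^k(x^{k+1}) ; an element is y : 'I_m -> R * R, y p = (y_{p,1}, y_{p,2}) *)
Definition Yset (k : nat) : set ('I_m -> R * R) :=
  let i := r_ik M k in
  let x' := r_xi M k i in let x'' := r_xi M k i.+1 in
  let a := r_a M k i in let b := r_b M k i in
  [set y | (forall p,
        esubdiff (phi_up (Phi P p)) (fup P (r_sigma M) k p (a p) x' x'') (y p).1 /\
        esubdiff (phi_down (Phi P p)) (flo P k p (b p) x' x'') (y p).2) /\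
     exists u w : 'I_m -> vec,
       (forall p, csubdiff (fun x => fup P (r_sigma M) k p (a p) x' x) x'' (u p) /\
                  supdiff (fun x => flo P k p (b p) x' x) x'' (w p)) /\
       \sum_(p < m) ((y p).1 *: u p + (y p).2 *: w p) + r_lam M *: (x'' - x') = 0].

End Method.

Definition ynorm {R : realType} {m : nat} (y : 'I_m -> R * R) : R :=
  Num.sqrt (\sum_(p < m) ((y p).1 ^+ 2 + (y p).2 ^+ 2)).

From HB Require Import structures.
From mathcomp Require Import all_boot all_order all_algebra.
From mathcomp Require Import boolp classical_sets reals constructive_ereal.
From mathcomp Require Import topology normedtype sequences.
From mathcomp Require Import ring lra.
Import Order.TTheory GRing.Theory Num.Theory.
Import numFieldNormedType.Exports.
Local Open Scope ring_scope.
Local Open Scope classical_set_scope.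
Set Implicit Arguments.
Unset Strict Implicit.

(* Suppose the multipliers of Y^k(x^{k+1}) were unbounded along a subsequence whose
   iterates converge to xbar. Divide them, together with the products y * u and y * w
   with the subgradients u, w of the subproblem that they weigh, by their common size,
   and pass to a subsequence along which everything converges; the limits do not all
   vanish. By Assumption 3 and the stopping test, u and w lie within 2 delta_k of
   dg^k - dh^k at x^{k,i_k} or at x^{k,i_k+1}, so each normalized product y u tends
   either to a multiple of an element of dA f_p(xbar), or, when u blows up, to a multiple
   of a nonzero horizon subgradient in dAinf f_p(xbar). The multipliers of the objective
   terms stay bounded since the phi_p are locally bounded, so their normalizations vanish;
   the products with phi_down vanish too: for p in I1 because phi_down = 0, for p in I2
   because dAinf f_p(xbar) = {0}. The limits then form a nontrivial solution of the
   system that Assumption 5 excludes. For a single k the same normalization contradicts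
   Assumption 6, so each Y^k is bounded; an unbounded family therefore has large
   multipliers at ever later indices, and (b) follows from (a) by Bolzano-Weierstrass. *)

Section RealSequences.
Context {R : realType}.
Implicit Types (u v : nat -> R) (a b c l : R).

Lemma rcvgE u l : rcvg u l <-> u @ \oo --> l.
Proof.
split=> [h | /cvgrPdist_lt h e e0].
  apply/cvgrPdist_lt => e e0; have [K HK] := h e e0.
  by exists K => // k /= kK; rewrite distrC; exact: HK.
have [K _ HK] := h e e0; exists K => k kK; rewrite distrC; exact: HK.
Qed.

Lemma rcvg_cst a : rcvg (fun _ => a) a.
Proof. by move=> e e0; exists 0%N => k _; rewrite subrr normr0. Qed.

Lemma rcvgD u v a b : rcvg u a -> rcvg v b -> rcvg (fun k => u k + v k) (a + b).
Proof. by move=> /rcvgE hu /rcvgE hv; apply/rcvgE; exact: cvgD. Qed.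

Lemma rcvgN u a : rcvg u a -> rcvg (fun k => - u k) (- a).
Proof. by move=> /rcvgE hu; apply/rcvgE; exact: cvgN. Qed.

Lemma rcvgM u v a b : rcvg u a -> rcvg v b -> rcvg (fun k => u k * v k) (a * b).
Proof. by move=> /rcvgE hu /rcvgE hv; apply/rcvgE; exact: cvgM. Qed.

Lemma rcvgV u l : l != 0 -> rcvg u l -> rcvg (fun j => (u j)^-1) l^-1.
Proof. by move=> l0 /rcvgE h; apply/rcvgE; exact: cvgV. Qed.

Lemma rcvg_norm u l : rcvg u l -> rcvg (fun k => `|u k|) `|l|.
Proof. by move=> /rcvgE h; apply/rcvgE; exact: cvg_norm. Qed.

Lemma rcvg_unique u a b : rcvg u a -> rcvg u b -> a = b.
Proof. by move=> /rcvgE ha /rcvgE hb; exact: (cvg_unique _ ha hb). Qed.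

Lemma rcvg_ext u v l : (forall k, u k = v k) -> rcvg u l -> rcvg v l.
Proof. by move=> /funext ->. Qed.

Lemma rcvg_le u v a b : rcvg u a -> rcvg v b ->
  (exists K, forall k, (K <= k)%N -> u k <= v k) -> a <= b.
Proof.
move=> /rcvgE ha /rcvgE hb [K HK]; apply: (ler_cvg_to ha hb).
by exists K => // k /= kK; exact: HK.
Qed.

Lemma rcvg_le_ev u l c : rcvg u l -> (exists K, forall k, (K <= k)%N -> u k <= c) -> l <= c.
Proof. by move=> h; apply: (rcvg_le h (rcvg_cst c)). Qed.

Lemma rcvg_ge_ev u l c : rcvg u l -> (exists K, forall k, (K <= k)%N -> c <= u k) -> c <= l.
Proof. by move=> h; apply: (rcvg_le (rcvg_cst c) h). Qed.

Lemma rcvg_sum (I : eqType) (r : seq I) (Pr : pred I) (f : nat -> I -> R) (L : I -> R) :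
  (forall i, Pr i -> rcvg (fun k => f k i) (L i)) ->
  rcvg (fun k => \sum_(i <- r | Pr i) f k i) (\sum_(i <- r | Pr i) L i).
Proof.
move=> h; elim: r => [|i r IH].
  by rewrite big_nil; apply: rcvg_ext (rcvg_cst 0) => k; rewrite big_nil.
rewrite big_cons; case: ifP => Pi.
  by apply: rcvg_ext (rcvgD (h i Pi) IH) => k; rewrite big_cons Pi.
by apply: rcvg_ext IH => k; rewrite big_cons Pi.
Qed.

Lemma rcvg_squeeze0 u v : rcvg v 0 ->
  (exists K, forall k, (K <= k)%N -> `|u k| <= v k) -> rcvg u 0.
Proof.
move=> hv [K1 h] e e0; have [K HK] := hv e e0; exists (maxn K K1) => k.
rewrite geq_max => /andP[k1 k2]; rewrite subr0.
by apply: le_lt_trans (h _ k2) _; apply: le_lt_trans (HK _ k1); rewrite subr0 ler_norm.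
Qed.

Lemma bounded_of_eventually_bounded u :
  (exists J B, forall j, (J <= j)%N -> `|u j| <= B) -> exists B, forall j, `|u j| <= B.
Proof.
move=> [J [B hB]]; exists (Num.max B 0 + \sum_(i < J) `|u i|) => j.
case: (leqP J j) => hj.
  apply: le_trans (hB j hj) _; apply: (@le_trans _ _ (Num.max B 0)); first by rewrite le_max lexx.
  by rewrite lerDl sumr_ge0.
apply: (@le_trans _ _ (\sum_(i < J) `|u i|)); last by rewrite lerDr le_max lexx orbT.
by rewrite (bigD1 (Ordinal hj)) //= lerDl sumr_ge0.
Qed.

Lemma rcvg_bounded u l : rcvg u l -> exists B, forall j, `|u j| <= B.
Proof.
move=> h; apply: bounded_of_eventually_bounded; have [K HK] := h 1 ltr01.
exists K, (`|l| + 1) => k /HK H; rewrite -[u k](subrK l) addrC.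
by apply: le_trans (ler_normD _ _) _; rewrite lerD2l (ltW H).
Qed.

Lemma rcvg_bounded_div u (tau : nat -> R) c :
  (forall j, `|u j| <= c) -> (forall j, j.+1%:R <= tau j) -> rcvg (fun j => u j / tau j) 0.
Proof.
move=> hu ht; apply: (rcvg_squeeze0 (v := fun j => `|c| * (j.+1%:R)^-1)).
  by have /rcvgE := @cvg_harmonic R => /(rcvgM (rcvg_cst `|c|)); rewrite mulr0.
exists 0%N => j _; have t0 : 0 < tau j by apply: lt_le_trans (ht j); rewrite ltr0n.
rewrite normrM normfV (gtr0_norm t0); apply: ler_pM.
- exact: normr_ge0.
- by rewrite invr_ge0 (ltW t0).
- exact: le_trans (hu j) (ler_norm _).
- by rewrite lef_pV2 ?posrE ?ltr0n.
Qed.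

End RealSequences.

Section Subsequences.
Implicit Types (s q : nat -> nat).

Lemma subseq_idx_ge s : subseq_idx s -> forall j, (j <= s j)%N.
Proof. by move=> h; elim=> [//|j IH]; exact: leq_ltn_trans IH (h j). Qed.

Lemma subseq_idx_mono s : subseq_idx s -> forall i j, (i <= j)%N -> (s i <= s j)%N.
Proof.
move=> h i j /subnK <-; elim: (j - i)%N => [//|d IH].
by rewrite addSn; exact: leq_trans IH (ltnW (h _)).
Qed.

Lemma subseq_idx_lt s : subseq_idx s -> forall i j, (i < j)%N -> (s i < s j)%N.
Proof. by move=> h i j ij; exact: leq_trans (h i) (subseq_idx_mono h ij). Qed.

Lemma subseq_idx_comp s q : subseq_idx s -> subseq_idx q -> subseq_idx (s \o q).
Proof. by move=> hs hq j; exact: leq_trans (hs _) (subseq_idx_mono hs (hq j)). Qed.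

Lemma subseq_idx_inverse q : subseq_idx q -> exists inv : nat -> nat,
  [/\ forall j, inv (q j) = j, forall k k', (k <= k')%N -> (inv k <= inv k')%N &
      forall J, exists K, forall k, (K <= k)%N -> (J <= inv k)%N].
Proof.
move=> sq; have ex k : exists j, (k <= q j)%N by exists k; exact: subseq_idx_ge.
pose inv k := ex_minn (ex k).
have invP k : (k <= q (inv k))%N /\ forall j, (k <= q j)%N -> (inv k <= j)%N.
  by rewrite /inv; case: ex_minnP.
exists inv; split.
- move=> j; have [h1 h2] := invP (q j); apply/eqP; rewrite eqn_leq h2 //=.
  by rewrite leqNgt; apply/negP => /(subseq_idx_lt sq); rewrite ltnNge h1.
- move=> k k' kk'; have [h1 _] := invP k'; have [_ h2] := invP k.
  by apply: h2; exact: leq_trans kk' h1.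
- move=> J; exists (q J).+1 => k kJ; have [h1 _] := invP k.
  rewrite leqNgt; apply/negP => /(subseq_idx_lt sq) h.
  by have := leq_ltn_trans h1 h; rewrite ltnNge (leq_trans (leqnSn _) kJ).
Qed.

Context {R : realType} {n : nat}.

Lemma rcvg_subseq (u : nat -> R) l s : subseq_idx s -> rcvg u l -> rcvg (u \o s) l.
Proof.
move=> hs h e e0; have [K HK] := h e e0; exists K => k kK; apply: HK.
exact: leq_trans kK (subseq_idx_ge hs k).
Qed.

Lemma vcvg_subseq (xs : nat -> 'rV[R]_n) x s : subseq_idx s -> vcvg xs x -> vcvg (xs \o s) x.
Proof.
move=> hs h e e0; have [K HK] := h e e0; exists K => k kK; apply: HK.
exact: leq_trans kK (subseq_idx_ge hs k).
Qed.

Lemma vcvg_subseq_extend q (a : nat -> 'rV[R]_n) x : subseq_idx q -> vcvg a x ->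
  exists xs, vcvg xs x /\ forall j, xs (q j) = a j.
Proof.
move=> sq ha; have [inv [h1 _ h3]] := subseq_idx_inverse sq.
exists (a \o inv); split; last by move=> j /=; rewrite h1.
move=> e e0; have [K HK] := ha e e0; have [K' HK'] := h3 K.
by exists K' => k /HK' /HK.
Qed.

Lemma nonincr_subseq_extend q (mu : nat -> R) : subseq_idx q -> (forall j, 0 < mu j) ->
  (forall j, mu j.+1 <= mu j) -> rcvg mu 0 ->
  exists lam : nat -> R, [/\ forall k, 0 < lam k, forall k, lam k.+1 <= lam k,
     rcvg lam 0 & forall j, lam (q j) = mu j].
Proof.
move=> sq mp md m0; have [inv [h1 h2 h3]] := subseq_idx_inverse sq.
have mmono i j : (i <= j)%N -> mu j <= mu i.
  move=> /subnK <-; elim: (j - i)%N => [//|d IH].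
  by rewrite addSn; exact: le_trans (md _) IH.
exists (mu \o inv); split => [k|k|e e0|j] /=; first exact: mp.
- by apply: mmono; apply: h2.
- by have [K HK] := m0 e e0; have [K' HK'] := h3 K; exists K' => k /HK' /HK.
- by rewrite h1.
Qed.

Lemma rcvg0_nonincr_subseq (mu : nat -> R) : (forall j, 0 < mu j) -> rcvg mu 0 ->
  exists psi, subseq_idx psi /\ forall j, mu (psi j.+1) <= mu (psi j).
Proof.
move=> mp m0.
have nx j : exists j', (j < j')%N /\ mu j' <= mu j.
  have [K HK] := m0 (mu j) (mp j); exists (maxn K j.+1).
  split; first by rewrite leq_max leqnn orbT.
  have := HK (maxn K j.+1); rewrite leq_max leqnn subr0 => /(_ isT) H.
  by apply: ltW; apply: le_lt_trans H; exact: ler_norm.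
have [f hf] := choice nx.
by exists (fun j => iter j f 0%N); split => j /=; case: (hf (iter j f 0%N)).
Qed.

End Subsequences.

Section BolzanoWeierstrass.
Context {R : realType}.

Lemma bounded_rseq_cvg_subseq (u : nat -> R) (B : R) :
  (forall j, `|u j| <= B) -> exists s, subseq_idx s /\ exists l, rcvg (u \o s) l.
Proof.
move=> hB; have bnd : bounded_fun u.
  exists B; split; first by rewrite num_real.
  by move=> x Bx y _; apply: le_trans (hB y) _; exact: ltW.
have [f fi fc] := bolzano_weierstrass bnd; exists f; split.
  by move=> j; rewrite ltnNge; have := fi j.+1 j; rewrite /Order.le /= => ->; rewrite ltnn.
by exists (lim (u \o f @ \oo)); apply/rcvgE; exact: fc.
Qed.

Lemma bounded_fam_cvg_subseq (I : finType) (a : nat -> I -> R) (B : R) :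
  (forall j i, `|a j i| <= B) ->
  exists s, subseq_idx s /\ exists L : I -> R, forall i, rcvg (fun j => a (s j) i) (L i).
Proof.
move=> hB.
suff /(_ (enum I)) [s [ss [L HL]]] : forall r : seq I, exists s, subseq_idx s /\
    exists L : I -> R, forall i, i \in r -> rcvg (fun j => a (s j) i) (L i).
  by exists s; split => //; exists L => i; apply: HL; rewrite mem_enum.
elim=> [|i0 r [s [ss [L HL]]]]; first by exists id; split => //; exists (fun _ => 0).
have [psi [spsi [l0 H0]]] := bounded_rseq_cvg_subseq (fun j => hB (s j) i0).
exists (s \o psi); split; first exact: subseq_idx_comp.
exists (fun i => if i == i0 then l0 else L i) => i; rewrite inE.
case: eqP => [-> _|_ /= ir]; first exact: H0.
exact: (rcvg_subseq spsi (HL i ir)).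
Qed.

End BolzanoWeierstrass.

Section EuclideanSpace.
Context {R : realType} {n : nat}.
Local Notation vec := 'rV[R]_n.
Implicit Types (u v w : vec).

Lemma dotC u v : dot u v = dot v u.
Proof. by apply: eq_bigr => i _; rewrite mulrC. Qed.

Lemma dotDl u v w : dot (u + v) w = dot u w + dot v w.
Proof. by rewrite /dot -big_split; apply: eq_bigr => i _; rewrite !mxE mulrDl. Qed.

Lemma dotZl a u w : dot (a *: u) w = a * dot u w.
Proof. by rewrite /dot mulr_sumr; apply: eq_bigr => i _; rewrite !mxE mulrA. Qed.

Lemma dotNl u w : dot (- u) w = - dot u w.
Proof. by rewrite -scaleN1r dotZl mulN1r. Qed.

Lemma dotBl u v w : dot (u - v) w = dot u w - dot v w.
Proof. by rewrite dotDl dotNl. Qed.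

Lemma dotNr u w : dot w (- u) = - dot w u.
Proof. by rewrite dotC dotNl dotC. Qed.

Lemma dotBr u v w : dot w (u - v) = dot w u - dot w v.
Proof. by rewrite dotC dotBl !(dotC w). Qed.

Lemma dot_delta v i : dot v (delta_mx 0 i) = v 0 i.
Proof.
rewrite /dot (bigD1 i) //= big1 ?addr0; first by rewrite mxE !eqxx mulr1.
by move=> j /negbTE ji; rewrite mxE ji andbF mulr0.
Qed.

Lemma ler_term_sum (I : finType) (f : I -> R) i : (forall i, 0 <= f i) -> f i <= \sum_i f i.
Proof. by move=> h; rewrite (bigD1 i) //= lerDl sumr_ge0. Qed.

Lemma ler_norm_sqrt_sum (I : finType) (a : I -> R) i : `|a i| <= Num.sqrt (\sum_j a j ^+ 2).
Proof.
rewrite -sqrtr_sqr ler_sqrt; last by apply: sumr_ge0 => j _; exact: sqr_ge0.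
by apply: ler_term_sum => j; exact: sqr_ge0.
Qed.

Lemma sqrt_sum_le_sum_norm (I : finType) (a : I -> R) :
  Num.sqrt (\sum_j a j ^+ 2) <= \sum_j `|a j|.
Proof.
have H (r : seq I) : \sum_(j <- r) a j ^+ 2 <= (\sum_(j <- r) `|a j|) ^+ 2.
  elim: r => [|i r IH]; first by rewrite !big_nil expr0n.
  rewrite !big_cons sqrrD -real_normK ?num_real // -addrA lerD2l.
  apply: le_trans IH _; rewrite lerDr mulrn_wge0 // mulr_ge0 // sumr_ge0 //.
have h0 : 0 <= \sum_j `|a j| by apply: sumr_ge0.
by rewrite -(ger0_norm h0) -sqrtr_sqr ler_sqrt ?sqr_ge0.
Qed.

Lemma vnormE v : vnorm v = Num.sqrt (\sum_(i < n) v 0 i ^+ 2).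
Proof. by congr Num.sqrt; apply: eq_bigr => i _; rewrite expr2. Qed.

Lemma vnorm_ge0 v : 0 <= vnorm v.
Proof. exact: sqrtr_ge0. Qed.

Lemma ler_coord_vnorm v i : `|v 0 i| <= vnorm v.
Proof. by rewrite vnormE; exact: (ler_norm_sqrt_sum (fun j => v 0 j)). Qed.

Lemma vnorm_le_sum v : vnorm v <= \sum_i `|v 0 i|.
Proof. by rewrite vnormE; exact: (sqrt_sum_le_sum_norm (fun j => v 0 j)). Qed.

Lemma vnormZ a v : vnorm (a *: v) = `|a| * vnorm v.
Proof.
rewrite !vnormE -sqrtr_sqr -sqrtrM ?sqr_ge0 //; congr Num.sqrt.
by rewrite mulr_sumr; apply: eq_bigr => i _; rewrite mxE exprMn.
Qed.

Lemma vnormN v : vnorm (- v) = vnorm v.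
Proof. by rewrite -scaleN1r vnormZ normrN normr1 mul1r. Qed.

Lemma vnormB u v : vnorm (u - v) = vnorm (v - u).
Proof. by rewrite -vnormN opprB. Qed.

Lemma vcvgE (xs : nat -> vec) x : vcvg xs x <-> forall i, rcvg (fun k => xs k 0 i) (x 0 i).
Proof.
split=> [h i e e0 | h e e0].
  have [K HK] := h e e0; exists K => k /HK; apply: le_lt_trans.
  by have := ler_coord_vnorm (xs k - x) i; rewrite !mxE.
have : rcvg (fun k => \sum_(i < n) `|xs k 0 i - x 0 i|) (\sum_(i < n) 0).
  apply: rcvg_sum => i _; rewrite -(normr0 R); apply: rcvg_norm.
  by rewrite -(subrr (x 0 i)); apply: rcvgD (h i) (rcvg_cst _).
rewrite big1_eq => /(_ e e0) [K HK]; exists K => k /HK; rewrite subr0 => H.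
apply: le_lt_trans (le_trans (vnorm_le_sum _) _) (le_lt_trans (ler_norm _) H).
by apply: ler_sum => i _; rewrite !mxE.
Qed.

Lemma vcvg_dist (xs ys : nat -> vec) x :
  vcvg xs x -> rcvg (fun k => vnorm (ys k - xs k)) 0 -> vcvg ys x.
Proof.
move=> /vcvgE hx hd; apply/vcvgE => i.
have hi : rcvg (fun k => ys k 0 i - xs k 0 i) 0.
  apply: (rcvg_squeeze0 hd); exists 0%N => k _.
  by have := ler_coord_vnorm (ys k - xs k) i; rewrite !mxE.
by rewrite -[x 0 i]addr0; apply: rcvg_ext (rcvgD (hx i) hi) => k; rewrite addrC subrK.
Qed.

Lemma vcvg_either (a b c : nat -> vec) x :
  vcvg a x -> vcvg b x -> (forall j, c j = a j \/ c j = b j) -> vcvg c x.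
Proof.
move=> ha hb hc e e0; have [K1 h1] := ha e e0; have [K2 h2] := hb e e0.
exists (maxn K1 K2) => k; rewrite geq_max => /andP[k1 k2].
by case: (hc k) => ->; [exact: h1 | exact: h2].
Qed.

Lemma bounded_vseq_cvg_subseq (v : nat -> vec) B : (forall j, vnorm (v j) <= B) ->
  exists s, subseq_idx s /\ exists x, vcvg (v \o s) x.
Proof.
move=> hB; have [s [ss [L HL]]] := bounded_fam_cvg_subseq
  (a := fun j (i : 'I_n) => v j 0 i) (fun j i => le_trans (ler_coord_vnorm _ _) (hB j)).
by exists s; split => //; exists (\row_i L i); apply/vcvgE => i; rewrite mxE; exact: HL.
Qed.

End EuclideanSpace.

Section MultiplierNorm.
Context {R : realType} {m : nat}.
Implicit Types (y : 'I_m -> R * R).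

Lemma ynormE y :
  ynorm y = Num.sqrt (\sum_(c : 'I_m * bool) (if c.2 then (y c.1).1 else (y c.1).2) ^+ 2).
Proof.
rewrite /ynorm -(pair_bigA _ (fun p (b : bool) => (if b then (y p).1 else (y p).2) ^+ 2)).
by congr Num.sqrt; apply: eq_bigr => p _; rewrite big_bool.
Qed.

Lemma ynorm_ge0 y : 0 <= ynorm y.
Proof. exact: sqrtr_ge0. Qed.

Lemma ler_ynorm1 y p : `|(y p).1| <= ynorm y.
Proof. by rewrite ynormE; exact: (ler_norm_sqrt_sum _ (p, true)). Qed.

Lemma ler_ynorm2 y p : `|(y p).2| <= ynorm y.
Proof. by rewrite ynormE; exact: (ler_norm_sqrt_sum _ (p, false)). Qed.

Lemma ynorm_le_sum y : ynorm y <= \sum_p (`|(y p).1| + `|(y p).2|).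
Proof.
rewrite ynormE; apply: le_trans (sqrt_sum_le_sum_norm _) _.
rewrite -(pair_bigA _ (fun p (b : bool) => `|if b then (y p).1 else (y p).2|)).
by apply: ler_sum => p _; rewrite big_bool.
Qed.

End MultiplierNorm.

Section ScalarConvexity.
Context {R : realType}.

(* Upper bound by convexity between -A and A; lower bound through
   phi 0 <= (phi z + phi (-z)) / 2. *)
Lemma convex_rfun_bounded (phi : R -> R) (A : R) : convex_rfun phi -> 0 < A ->
  forall z, `|z| <= A -> `|phi z| <= 2 * `|phi 0| + `|phi (- A)| + `|phi A|.
Proof.
move=> cv A0.
have up z : `|z| <= A -> phi z <= `|phi (- A)| + `|phi A|.
  rewrite ler_norml => /andP[z1 z2]; pose t := (A - z) / (2 * A).
  have t0 : 0 <= t by apply: divr_ge0; lra.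
  have t1 : t <= 1 by rewrite ler_pdivrMr; lra.
  have t01 : 0 <= t <= 1 by rewrite t0 t1.
  have -> : z = t * (- A) + (1 - t) * A by rewrite /t; field; lra.
  apply: le_trans (cv _ _ _ t01) _.
  apply: lerD; apply: le_trans (ler_norm _) _; rewrite normrM ger0_norm ?subr_ge0 //.
    by rewrite ler_piMl.
  by rewrite ler_piMl // lerBlDr lerDl.
move=> z hz; rewrite ler_norml; apply/andP; split; last first.
  by apply: le_trans (up z hz) _; rewrite -addrA lerDr mulr_ge0.
have hmz : `|- z| <= A by rewrite normrN.
have h12 : ((0:R) <= 1/2) && (1/2 <= (1:R)) by apply/andP; split; lra.
have := cv z (- z) _ h12; have -> : 1/2 * z + (1 - 1/2) * - z = 0 by field.
have := up _ hmz; have := ler_norm (phi 0); have := ler_norm (- phi 0).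
rewrite normrN (_ : 1 - 1/2 = 1/2 :> R); last by field.
lra.
Qed.

Lemma esubdiff_bounded (psi : R -> \bar R) (A D t y : R) :
  (forall z, `|z| <= A + 1 -> exists r, psi z = r%:E /\ `|r| <= D) ->
  `|t| <= A -> esubdiff psi t y -> `|y| <= 2 * D.
Proof.
move=> hb ht [_ hy].
have ht1 : `|t + 1| <= A + 1 by apply: le_trans (ler_normD _ _) _; rewrite normr1 lerD2r.
have ht2 : `|t - 1| <= A + 1 by apply: le_trans (ler_normB _ _) _; rewrite normr1 lerD2r.
have ht0 : `|t| <= A + 1 by lra.
have [r0 [e0 b0]] := hb t ht0.
have [r1 [e1 b1]] := hb _ ht1; have [r2 [e2 b2]] := hb _ ht2.
have := hy (t + 1); have := hy (t - 1); rewrite e0 e1 e2 -!EFinD !lee_fin.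
have -> : t + 1 - t = 1 by ring.
have -> : t - 1 - t = -1 by ring.
move: b0 b1 b2; rewrite !ler_norml => /andP[? ?] /andP[? ?] /andP[? ?] ? ?.
by apply/andP; split; lra.
Qed.

Lemma esubdiff_zero t (y : R) : esubdiff (fun _ => 0%E) t y -> y = 0.
Proof.
move=> [_ hy]; have := hy (t + 1); have := hy (t - 1); rewrite !add0e !lee_fin.
have -> : t + 1 - t = 1 by ring.
have -> : t - 1 - t = -1 by ring.
lra.
Qed.

Lemma ncone0 (C : set R) t : C t -> ncone C t 0.
Proof. by move=> ct; split => // s _; rewrite mul0r. Qed.

Lemma ncone_le0_scale t y a :
  0 < a -> ncone [set s : R | s <= 0] t y -> ncone [set s | s <= 0] t (y * a).
Proof.
by move=> a0 [t0 h]; split => // s s0; rewrite mulrAC (mulr_le0_ge0 (h s s0) (ltW a0)).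
Qed.

Lemma ncone_le0_limit (t y : nat -> R) th yh : rcvg t th -> rcvg y yh ->
  (forall j, ncone [set s : R | s <= 0] (t j) (y j)) -> ncone [set s | s <= 0] th yh.
Proof.
move=> ht hy hn; split => [|s s0].
  by apply: (rcvg_le_ev ht); exists 0%N => j _; case: (hn j).
apply: (rcvg_le_ev (rcvgM hy (rcvgD (rcvg_cst s) (rcvgN ht)))).
by exists 0%N => j _; case: (hn j) => _ /(_ s s0).
Qed.

End ScalarConvexity.

Section SubgradientBounds.
Context {R : realType} {n : nat}.
Local Notation vec := 'rV[R]_n.

Definition coord_osc (F : vec -> R) (x : vec) i :=
  `|F (x + delta_mx 0 i) - F x| + `|F (x - delta_mx 0 i) - F x|.

Lemma csubdiff_coord_bound (F : vec -> R) x v i : csubdiff F x v -> `|v 0 i| <= coord_osc F x i.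
Proof.
move=> h; have h1 := h (x + delta_mx 0 i); have h2 := h (x - delta_mx 0 i).
have e1 : x + delta_mx 0 i - x = delta_mx 0 i by rewrite addrAC subrr add0r.
have e2 : x - delta_mx 0 i - x = - delta_mx 0 i by rewrite addrAC subrr add0r.
move: h1 h2; rewrite e1 e2 dotNr !dot_delta => h1 h2.
have := ler_norm (F (x + delta_mx 0 i) - F x); have := ler_norm (F (x - delta_mx 0 i) - F x).
have := normr_ge0 (F (x + delta_mx 0 i) - F x); have := normr_ge0 (F (x - delta_mx 0 i) - F x).
by rewrite /coord_osc ler_norml => *; apply/andP; split; lra.
Qed.

Lemma csubdiff_closed (F : vec -> R) (x : vec) (us : nat -> vec) (u : vec) :
  (forall j, csubdiff F x (us j)) -> vcvg us u -> csubdiff F x u.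
Proof.
move=> hu /vcvgE hc z; rewrite -lerBrDl.
apply: (rcvg_le_ev (u := fun j => dot (us j) (z - x))).
  by apply: rcvg_sum => i _; apply: rcvgM (hc i) (rcvg_cst _).
by exists 0%N => j _; rewrite lerBrDl; exact: hu.
Qed.

Lemma supdiff_closed (F : vec -> R) (x : vec) (ws : nat -> vec) (w : vec) :
  (forall j, supdiff F x (ws j)) -> vcvg ws w -> supdiff F x w.
Proof.
move=> hw /vcvgE hc; apply: (csubdiff_closed (us := fun j => - ws j)) => //.
by apply/vcvgE => i; rewrite mxE; apply: rcvg_ext (rcvgN (hc i)) => j; rewrite mxE.
Qed.

Lemma csubdiff_vnorm_bounded (F : vec -> R) x : exists B, forall v, csubdiff F x v -> vnorm v <= B.
Proof.
exists (\sum_i coord_osc F x i) => v hv; apply: le_trans (vnorm_le_sum _) _.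
by apply: ler_sum => i _; exact: csubdiff_coord_bound.
Qed.

Lemma supdiff_vnorm_bounded (F : vec -> R) x : exists B, forall v, supdiff F x v -> vnorm v <= B.
Proof.
have [B hB] := csubdiff_vnorm_bounded (fun z => - F z) x.
by exists B => v /hB; rewrite vnormN.
Qed.

End SubgradientBounds.

Section OuterFunctions.
Context {R : realType} {n : nat} (P : cp1 R n).
Local Notation m := (cp_m P).
Implicit Types (p : 'I_m).

Lemma Phi_constr p : ~~ is_obj P p -> forall z, Phi P p z = if z <= 0 then 0%E else +oo%E.
Proof. by move=> hp z; rewrite /Phi (negbTE hp). Qed.

Lemma Phi_obj p : is_obj P p -> forall z, Phi P p z = (cp_phi P p z)%:E.
Proof. by move=> hp z; rewrite /Phi hp. Qed.

Lemma I1_constr p : ~~ is_obj P p -> I1 P p.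
Proof.
move=> hp s t st; rewrite !Phi_constr //.
case: ifP => hs; case: ifP => ht //; rewrite ?leey //.
by move: hs; rewrite (le_trans st ht).
Qed.

Lemma phi_up_I1 p : I1 P p -> phi_up (Phi P p) = Phi P p.
Proof. by move=> h; apply: funext => z; rewrite /phi_up; case: pselect. Qed.

Lemma phi_down_I1 p : I1 P p -> phi_down (Phi P p) = fun _ => 0%E.
Proof. by move=> h; apply: funext => z; rewrite /phi_down; case: pselect. Qed.

Lemma edom_Phi_constr p t : ~~ is_obj P p -> edom (Phi P p) t <-> t <= 0.
Proof.
move=> hp; rewrite /edom /= Phi_constr //; split; first by case: ifP => // _; rewrite ltxx.
by move=> ->; rewrite ltey.
Qed.

Lemma edom_Phi_obj p t : is_obj P p -> edom (Phi P p) t.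
Proof. by move=> hp; rewrite /edom /= Phi_obj // ltey. Qed.

Lemma esubdiff_Phi_constr p t y : ~~ is_obj P p -> esubdiff (phi_up (Phi P p)) t y ->
  ncone [set s | s <= 0] t y.
Proof.
move=> hp; rewrite phi_up_I1; last exact: I1_constr.
move=> [hf hy].
move: hf; rewrite Phi_constr //; case: ifP => // t0 _; split => // s s0.
by have := hy s; rewrite !Phi_constr //= t0 s0 add0e lee_fin.
Qed.

Lemma esubdiff_phi_down_I1 p t y : I1 P p -> esubdiff (phi_down (Phi P p)) t y -> y = 0.
Proof. by move=> hp; rewrite phi_down_I1 //; exact: esubdiff_zero. Qed.

Lemma phi_updown_bounded p : is_obj P p -> convex_rfun (cp_phi P p) ->
  forall A : R, 0 < A -> exists D : R, 0 <= D /\ forall z, `|z| <= A ->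
    (exists r, phi_up (Phi P p) z = r%:E /\ `|r| <= D) /\
    (exists r, phi_down (Phi P p) z = r%:E /\ `|r| <= D).
Proof.
move=> hp cv A A0; set phi := cp_phi P p; set zm := minimizer (Phi P p).
pose G := 2 * `|phi 0| + `|phi (- A)| + `|phi A|.
have hG := convex_rfun_bounded cv A0.
have G0 : 0 <= G by rewrite !addr_ge0 ?mulr_ge0.
exists (G + `|phi zm|); split => [|z hz]; first by rewrite addr_ge0.
have hGz : `|phi z| <= G + `|phi zm| by apply: le_trans (hG z hz) _; rewrite lerDl.
have h0 : `|0 : R| <= G + `|phi zm| by rewrite normr0 addr_ge0.
rewrite /phi_up /phi_down; case: (pselect (enondecr (Phi P p))) => [h1|h1] /=.
  by split; [exists (phi z); rewrite Phi_obj | exists 0].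
case: (pselect (enonincr (Phi P p))) => [h2|h2] /=.
  by split; [exists 0 | exists (phi z); rewrite Phi_obj].
case: ifP => _; rewrite !Phi_obj //; split.
- by exists (phi zm); rewrite lerDr.
- exists (phi z - phi zm); split => //; apply: le_trans (ler_normB _ _) _.
  by rewrite lerD2r (hG z hz).
- by exists (phi z).
- by exists 0.
Qed.

Lemma esubdiff_phi_updown_bounded p : is_obj P p -> convex_rfun (cp_phi P p) ->
  forall A : R, 0 < A -> exists C : R, 0 <= C /\ forall t y, `|t| <= A ->
    (esubdiff (phi_up (Phi P p)) t y \/ esubdiff (phi_down (Phi P p)) t y) -> `|y| <= C.
Proof.
move=> hp cv A A0; have A10 : 0 < A + 1 by lra.
have [D [D0 hD]] := phi_updown_bounded hp cv A10.
exists (2 * D); split => [|t y ht]; first by rewrite mulr_ge0.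
by case=> hy; apply: (esubdiff_bounded _ ht hy) => z /hD [].
Qed.

End OuterFunctions.

Section Unboundedness.
Context {R : realType}.

Lemma not_bounded_seq (T : Type) (S : set T) (f : T -> R) :
  ~ (exists B, forall y, S y -> f y <= B) ->
  exists ys : nat -> T, forall j, S (ys j) /\ j.+1%:R < f (ys j).
Proof.
move=> hn; suff h j : exists y, S y /\ j.+1%:R < f y by have [ys hys] := choice h; exists ys.
apply: contrapT => hj; apply: hn.
by exists j.+1%:R => y hy; rewrite leNgt; apply/negP => hlt; apply: hj; exists y.
Qed.

Lemma not_unif_bounded_subseq (T : Type) (S : nat -> set T) (f : T -> R) :
  (forall k, exists B, forall y, S k y -> f y <= B) ->
  ~ (exists B, forall k y, S k y -> f y <= B) ->
  exists (jj : nat -> nat) (ys : nat -> T),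
    subseq_idx jj /\ forall i, S (jj i) (ys i) /\ i.+1%:R < f (ys i).
Proof.
move=> /choice [Bk hBk] hn.
have hF (iJ : nat * nat) :
    exists jy : nat * T, (iJ.2 < jy.1)%N /\ S jy.1 jy.2 /\ iJ.1.+1%:R < f jy.2.
  apply: contrapT => hno; apply: hn.
  exists (Num.max iJ.1.+1%:R (\sum_(j < iJ.2.+1) `|Bk j|)) => j y hy.
  case: (leqP j iJ.2) => hj.
    apply: le_trans (hBk _ _ hy) _; rewrite le_max; apply/orP; right.
    apply: le_trans (ler_norm _) _; rewrite -ltnS in hj.
    apply: (ler_term_sum (f := fun j : 'I_iJ.2.+1 => `|Bk j|) (Ordinal hj)) => i.
    exact: normr_ge0.
  by rewrite le_max; apply/orP; left; rewrite leNgt; apply/negP => hlt; apply: hno; exists (j, y).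
have [F hF'] := choice hF.
pose jj := fix jj i := if i is i'.+1 then (F (i, jj i')).1 else (F (0, 0))%N.1.
exists jj, (fun i => (F (i, if i is i'.+1 then jj i' else 0%N)).2); split.
  by move=> i; exact: (hF' (i.+1, jj i)).1.
by case=> [|i]; [exact: (hF' (0, 0)%N).2 | exact: (hF' (i.+1, jj i)).2].
Qed.

End Unboundedness.

Section VectorLimits.
Context {R : realType} {n : nat}.
Local Notation vec := 'rV[R]_n.

Lemma vcvg_ext (a b : nat -> vec) x : (forall j, a j = b j) -> vcvg a x -> vcvg b x.
Proof. by move=> /funext ->. Qed.

Lemma vcvg_cst (x : vec) : vcvg (fun=> x) x.
Proof. by apply/vcvgE => i; exact: rcvg_cst. Qed.

Lemma vcvg_unique (xs : nat -> vec) a b : vcvg xs a -> vcvg xs b -> a = b.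
Proof. by move=> /vcvgE ha /vcvgE hb; apply/rowP => i; exact: rcvg_unique (ha i) (hb i). Qed.

Lemma vcvgD (xs ys : nat -> vec) x y :
  vcvg xs x -> vcvg ys y -> vcvg (fun j => xs j + ys j) (x + y).
Proof.
move=> /vcvgE hx /vcvgE hy; apply/vcvgE => i; rewrite mxE.
by apply: rcvg_ext (rcvgD (hx i) (hy i)) => j; rewrite mxE.
Qed.

Lemma vcvgZ (r : nat -> R) (xs : nat -> vec) rh x :
  rcvg r rh -> vcvg xs x -> vcvg (fun j => r j *: xs j) (rh *: x).
Proof.
move=> hr /vcvgE hx; apply/vcvgE => i; rewrite mxE.
by apply: rcvg_ext (rcvgM hr (hx i)) => j; rewrite mxE.
Qed.

Lemma vcvg_sum_eq0 (I : finType) (F : nat -> I -> vec) (c : nat -> vec) (L : I -> vec) :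
  (forall j, \sum_i F j i + c j = 0) -> (forall i, vcvg (F^~ i) (L i)) -> vcvg c 0 ->
  \sum_i L i = 0.
Proof.
move=> he hF hc; apply: (vcvg_unique (xs := fun j => \sum_i F j i + c j)); last first.
  by apply: vcvg_ext (vcvg_cst 0) => j; rewrite he.
rewrite -[X in vcvg _ X]addr0; apply/vcvgE => k; rewrite mxE.
apply: rcvg_ext (rcvgD _ ((vcvgE _ _).1 hc k)) => [j|]; first by rewrite mxE.
rewrite summxE; apply: rcvg_ext (rcvg_sum _ (fun i _ => (vcvgE _ _).1 (hF i) k)) => j.
by rewrite summxE.
Qed.

Lemma vcvg_bounded (xs : nat -> vec) x : vcvg xs x -> exists B, forall j, vnorm (xs j) <= B.
Proof.
move=> /vcvgE hx; have /choice [B hB] i := rcvg_bounded (hx i).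
exists (\sum_i B i) => j; apply: le_trans (vnorm_le_sum _) (ler_sum _ _) => i _; exact: hB.
Qed.

Lemma bounded_scaled_limit (S : set vec) (e : nat -> vec) (r : nat -> R) rh z B :
  (forall es v, (forall j, S (es j)) -> vcvg es v -> S v) ->
  (forall j, S (e j)) -> (forall j, vnorm (e j) <= B) ->
  rcvg r rh -> vcvg (fun j => r j *: e j) z -> exists v, S v /\ z = rh *: v.
Proof.
move=> Scl hS hB hr hz; have [s [ss [v hv]]] := bounded_vseq_cvg_subseq hB.
exists v; split; first by apply: Scl hv => j; exact: hS.
by apply: vcvg_unique (vcvg_subseq ss hz) (vcvgZ (rcvg_subseq ss hr) hv).
Qed.

End VectorLimits.

Section NormalizedMultipliers.
Context {R : realType} {n m : nat}.
Local Notation vec := 'rV[R]_n.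
Variables (y : nat -> 'I_m -> R * R) (u w : nat -> 'I_m -> vec) (c : nat -> vec).

Definition mult_part j p (b : bool) := if b then (y j p).1 else (y j p).2.
Definition grad_part j p (b : bool) := if b then (y j p).1 *: u j p else (y j p).2 *: w j p.

(* The multipliers are normalized together with the products y * u, y * w they weigh,
   so that every normalized quantity stays in [-1, 1]. *)
Definition mult_scale j := ynorm (y j) + \sum_p \sum_b vnorm (grad_part j p b).

Lemma mult_scale_ge_ynorm j : ynorm (y j) <= mult_scale j.
Proof. by rewrite lerDl; apply: sumr_ge0 => p _; apply: sumr_ge0 => b _; exact: vnorm_ge0. Qed.

Lemma mult_scale_le_sum j :
  mult_scale j <= \sum_p \sum_b (`|mult_part j p b| + \sum_i `|grad_part j p b 0 i|).
Proof.
rewrite [leRHS](eq_bigr _ (fun p _ => big_split _ _ _ _ _)) big_split /=.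
apply: lerD; last by do 2!apply: ler_sum => ? _; exact: vnorm_le_sum.
by apply: le_trans (ynorm_le_sum _) _; apply: ler_sum => p _; rewrite big_bool.
Qed.

Lemma mult_part_le j p b : `|mult_part j p b| <= mult_scale j.
Proof.
by apply: le_trans (mult_scale_ge_ynorm j); case: b; [exact: ler_ynorm1 | exact: ler_ynorm2].
Qed.

Lemma grad_part_le j p b i : `|grad_part j p b 0 i| <= mult_scale j.
Proof.
apply: le_trans (ler_coord_vnorm _ i) _; rewrite /mult_scale ler_wpDl ?ynorm_ge0 //.
have h0 q : 0 <= \sum_b vnorm (grad_part j q b) by apply: sumr_ge0 => *; exact: vnorm_ge0.
rewrite (bigD1 p) //= (bigD1 b) //= -addrA lerDl addr_ge0 ?sumr_ge0 //.
by move=> *; exact: vnorm_ge0.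
Qed.

Lemma normalized_parts_ge1 j : 0 < mult_scale j ->
  1 <= \sum_p \sum_b (`|mult_part j p b / mult_scale j| +
                      \sum_i `|grad_part j p b 0 i / mult_scale j|).
Proof.
move=> t0; have normM x : `|x / mult_scale j| = `|x| / mult_scale j.
  by rewrite normrM normfV (gtr0_norm t0).
have -> : \sum_p \sum_b (`|mult_part j p b / mult_scale j| +
                         \sum_i `|grad_part j p b 0 i / mult_scale j|) =
    (\sum_p \sum_b (`|mult_part j p b| + \sum_i `|grad_part j p b 0 i|)) / mult_scale j.
  rewrite mulr_suml; apply: eq_bigr => p _; rewrite mulr_suml; apply: eq_bigr => b _.
  by rewrite normM mulrDl mulr_suml; congr (_ + _); apply: eq_bigr => i _; rewrite normM.
by rewrite ler_pdivlMr // mul1r mult_scale_le_sum.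
Qed.

Lemma normalized_mult_limit0 (obj : pred 'I_m) s (tau : nat -> R) (yh : 'I_m -> bool -> R) :
  (forall p, exists C, forall j, (obj p -> `|(y j p).1| <= C) /\ `|(y j p).2| <= C) ->
  (forall j, j.+1%:R <= tau j) ->
  (forall p b, rcvg (fun j => mult_part (s j) p b / tau j) (yh p b)) ->
  (forall p, yh p false = 0) /\ (forall p, obj p -> yh p true = 0).
Proof.
move=> hC ht hy; split => [p|p hp]; have [C hC'] := hC p.
  exact: rcvg_unique (hy p false) (rcvg_bounded_div (fun j => (hC' _).2) ht).
exact: rcvg_unique (hy p true) (rcvg_bounded_div (fun j => (hC' _).1 hp) ht).
Qed.

Hypothesis Yset_eq : forall j, \sum_p ((y j p).1 *: u j p + (y j p).2 *: w j p) + c j = 0.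

Lemma normalized_Yset_eq j :
  \sum_p ((mult_part j p true / mult_scale j) *: u j p +
          (mult_part j p false / mult_scale j) *: w j p) + (mult_scale j)^-1 *: c j = 0.
Proof.
transitivity ((mult_scale j)^-1 *: (\sum_p ((y j p).1 *: u j p + (y j p).2 *: w j p) + c j)).
  rewrite scalerDr scaler_sumr; congr (_ + _); apply: eq_bigr => p _.
  by rewrite scalerDr !scalerA ![_^-1 * _]mulrC.
by rewrite Yset_eq scaler0.
Qed.

Lemma normalized_multiplier_limits B :
  (forall j, vnorm (c j) <= B) -> (forall j, j.+1%:R < ynorm (y j)) ->
  exists s, [/\ subseq_idx s, forall j, j.+1%:R <= mult_scale (s j) &
  exists (yh : 'I_m -> bool -> R) (zh : 'I_m -> bool -> vec),
  [/\ forall p b, rcvg (fun j => mult_part (s j) p b / mult_scale (s j)) (yh p b),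
      forall p b, vcvg (fun j => (mult_part (s j) p b / mult_scale (s j)) *:
                                  (if b then u else w) (s j) p) (zh p b),
      \sum_p (zh p true + zh p false) = 0 &
      ~ (forall p b, yh p b = 0 /\ zh p b = 0)]].
Proof.
move=> hB hy; set tau := mult_scale.
have tau_ge j : j.+1%:R <= tau j := ltW (lt_le_trans (hy j) (mult_scale_ge_ynorm j)).
have tau_pos j : 0 < tau j by apply: lt_le_trans (tau_ge j); rewrite ltr0n.
pose a j (x : ('I_m * bool) + ('I_m * bool * 'I_n)) := match x with
  | inl (p, b) => mult_part j p b / tau j
  | inr (p, b, i) => grad_part j p b 0 i / tau j end.
have ha j x : `|a j x| <= 1.
  case: x => [[p b]|[[p b] i]];
  rewrite /= normrM normfV (gtr0_norm (tau_pos j)) ler_pdivrMr // mul1r;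
  by [exact: mult_part_le | exact: grad_part_le].
have [s [ss [L hL]]] := bounded_fam_cvg_subseq ha.
have tau_ge_s j : j.+1%:R <= tau (s j).
  by apply: le_trans (tau_ge _); rewrite ler_nat ltnS subseq_idx_ge.
exists s; split => //; exists (fun p b => L (inl (p, b))), (fun p b => \row_i L (inr (p, b, i))).
have hz p b : vcvg (fun j => (mult_part (s j) p b / tau (s j)) *: (if b then u else w) (s j) p)
                   (\row_i L (inr (p, b, i))).
  apply/vcvgE => i; rewrite mxE; apply: rcvg_ext (hL (inr (p, b, i))) => j.
  by rewrite /= /grad_part /mult_part; case: b; rewrite !mxE mulrAC.
split; [by move=> p b; exact: hL (inl (p, b)) | exact: hz | |].
  apply: vcvg_sum_eq0 (fun j => normalized_Yset_eq (s j)) _ _ => [p|].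
    exact: vcvgD (hz p true) (hz p false).
  apply/vcvgE => i; rewrite mxE; have hc j : `|c (s j) 0 i| <= B.
    exact: le_trans (ler_coord_vnorm _ i) (hB _).
  by apply: rcvg_ext (rcvg_bounded_div hc tau_ge_s) => j; rewrite mxE mulrC.
move=> h0; have hlim : rcvg (fun j => \sum_p \sum_b
    (`|a (s j) (inl (p, b))| + \sum_i `|a (s j) (inr (p, b, i))|))
    (\sum_p \sum_b (`|L (inl (p, b))| + \sum_i `|L (inr (p, b, i))|)).
  apply: rcvg_sum => p _; apply: rcvg_sum => b _.
  by apply: rcvgD; last apply: rcvg_sum => i _; exact: rcvg_norm (hL _).
rewrite big1 in hlim; last first.
  move=> p _; rewrite big1 // => b _.
  have [e1 /rowP e2] := h0 p b; rewrite e1 normr0 add0r big1 // => i _.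
  by have := e2 i; rewrite !mxE => ->; rewrite normr0.
suff : (1 : R) <= 0 by rewrite ler10.
by apply: (rcvg_ge_ev hlim); exists 0%N => j _; exact: normalized_parts_ge1.
Qed.

End NormalizedMultipliers.

Section Damping.
Context {R : realType} {n : nat}.
Local Notation vec := 'rV[R]_n.

Definition damp (v : vec) : R := (1 + vnorm v)^-1.

Lemma damp_gt0 v : 0 < damp v.
Proof. by rewrite invr_gt0 ltr_wpDr ?vnorm_ge0. Qed.

Lemma damp_le1 v : damp v <= 1.
Proof. by rewrite invf_le1 ?lerDl ?vnorm_ge0 // ltr_wpDr ?vnorm_ge0. Qed.

Lemma vnorm_damp v : vnorm (damp v *: v) = 1 - damp v.
Proof.
have h0 : 1 + vnorm v != 0 by rewrite gt_eqF // ltr_wpDr ?vnorm_ge0.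
by rewrite vnormZ (ger0_norm (ltW (damp_gt0 v))) /damp; field.
Qed.

(* The damped vectors have norm 1 - damp, which tends to 1 when the vectors blow up. *)
Lemma damped_limit_neq0 (e : nat -> vec) d :
  rcvg (fun j => damp (e j)) 0 -> vcvg (fun j => damp (e j) *: e j) d -> d != 0.
Proof.
move=> h0 hd; apply/negP => /eqP d0; move: hd; rewrite d0 => /vcvgE hd.
have h1 : rcvg (fun j => \sum_i `|(damp (e j) *: e j) 0 i|) (\sum_(i < n) `|0 : R|).
  by apply: rcvg_sum => i _; apply: rcvg_norm; have := hd i; rewrite mxE.
rewrite normr0 big1_eq in h1; suff : (1 : R) <= 0 by rewrite ler10.
have h2 := rcvgD (rcvg_cst 1) (rcvgN h0); rewrite oppr0 addr0 in h2.
apply: (rcvg_le h2 h1); exists 0%N => j _.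
by rewrite -vnorm_damp vnorm_le_sum.
Qed.

Lemma vcvg_damped_shadow (e et : nat -> vec) d :
  rcvg (fun j => vnorm (e j - et j)) 0 -> vcvg (fun j => damp (e j) *: e j) d ->
  vcvg (fun j => damp (e j) *: et j) d.
Proof.
move=> hn hd; apply: vcvg_dist hd _; apply: (rcvg_squeeze0 hn); exists 0%N => j _.
rewrite ger0_norm ?vnorm_ge0 // -scalerBr vnormZ vnormB (ger0_norm (ltW (damp_gt0 _))).
by rewrite ler_piMl ?vnorm_ge0 ?damp_le1.
Qed.

(* [r / damp e = r + r |e|] stays bounded when [r] and [r e] converge. *)
Lemma damped_cvg_subseq (e : nat -> vec) (r : nat -> R) rh z :
  rcvg r rh -> vcvg (fun j => r j *: e j) z -> exists s, subseq_idx s /\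
  exists muh ch dh, [/\ rcvg (fun j => damp (e (s j))) muh,
                        rcvg (fun j => r (s j) / damp (e (s j))) ch &
                        vcvg (fun j => damp (e (s j)) *: e (s j)) dh].
Proof.
move=> hr hz; have [Br hBr] := rcvg_bounded hr; have [Bz hBz] := vcvg_bounded hz.
have Br0 : 0 <= Br := le_trans (normr_ge0 _) (hBr 0%N).
have Bz0 : 0 <= Bz := le_trans (vnorm_ge0 _) (hBz 0%N).
pose a j (x : bool + 'I_n) := match x with
  | inl b => if b then damp (e j) else r j / damp (e j)
  | inr i => (damp (e j) *: e j) 0 i end.
have ha j x : `|a j x| <= 1 + Br + Bz.
  case: x => [[]|i] /=.
  - by rewrite (ger0_norm (ltW (damp_gt0 _))); have := damp_le1 (e j); lra.
  - rewrite /damp invrK mulrDr mulr1; apply: le_trans (ler_normD _ _) _.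
    have := hBr j; have := hBz j; rewrite vnormZ normrM (ger0_norm (vnorm_ge0 _)); lra.
  - apply: le_trans (ler_coord_vnorm _ i) _; rewrite vnorm_damp.
    by have := damp_gt0 (e j); lra.
have [s [ss [L hL]]] := bounded_fam_cvg_subseq ha.
exists s; split => //; exists (L (inl true)), (L (inl false)), (\row_i L (inr i)).
split; [exact: hL (inl true) | exact: hL (inl false) |].
by apply/vcvgE => i; rewrite mxE; exact: hL (inr i).
Qed.

End Damping.

Section OuterLimits.
Context {R : realType} {n : nat} (P : cp1 R n).
Local Notation m := (cp_m P).
Local Notation vec := 'rV[R]_n.

Definition dC_at k p (x : vec) := dC P p (fun=> x) k.

Definition cq_alternative p xbar (y : R) (v : vec) : Prop :=
  ((exists t, Tset P p xbar t /\ ncone (edom (Phi P p)) t y) /\ conv_hull (dA P p xbar) v) \/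
  (dAinf P p xbar v /\ v <> 0).

Lemma conv_hull_of_mem (A : set vec) v : A v -> conv_hull A v.
Proof. by move=> hv; exists 1%N, (fun=> 1), (fun=> v); rewrite !big_ord1 scale1r; do !split. Qed.

Lemma dA_of_cvg p xbar q (pts et : nat -> vec) v :
  subseq_idx q -> vcvg pts xbar -> (forall j, dC_at (q j) p (pts j) (et j)) ->
  vcvg et v -> dA P p xbar v.
Proof.
move=> sq hp het hv; have [xs [hxs hq]] := vcvg_subseq_extend sq hp.
exists xs; split => //; exists q; split => //; exists et; split => // j.
by rewrite /dC hq; exact: het.
Qed.

Lemma dAinf_of_cvg p xbar q (pts et : nat -> vec) (mu : nat -> R) d :
  subseq_idx q -> vcvg pts xbar -> (forall j, dC_at (q j) p (pts j) (et j)) ->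
  (forall j, 0 < mu j) -> rcvg mu 0 -> vcvg (fun j => mu j *: et j) d -> dAinf P p xbar d.
Proof.
move=> sq hp het mp m0 hd; have [xs [hxs hq]] := vcvg_subseq_extend sq hp.
have [psi [spsi hpsi]] := rcvg0_nonincr_subseq mp m0.
have sq' := subseq_idx_comp sq spsi.
have [lam [lp ld l0 lq]] :=
  nonincr_subseq_extend sq' (fun j => mp (psi j)) hpsi (rcvg_subseq spsi m0).
exists xs; split => //; right; exists (q \o psi); split => //.
exists lam; do 3!split => //; exists (et \o psi); split.
  by move=> j; rewrite /dC /= hq; exact: het.
by apply: vcvg_ext (vcvg_subseq spsi hd) => j /=; rewrite lq.
Qed.

Lemma dC_limit_dichotomy p xbar q (pts et e : nat -> vec) (r : nat -> R) rh z :
  subseq_idx q -> vcvg pts xbar -> (forall j, dC_at (q j) p (pts j) (et j)) ->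
  rcvg (fun j => vnorm (e j - et j)) 0 -> rcvg r rh -> vcvg (fun j => r j *: e j) z ->
  (exists v, dA P p xbar v /\ z = rh *: v) \/
  (exists c d, [/\ dAinf P p xbar d, d != 0, z = c *: d & rh = 0]).
Proof.
move=> sq hp het hn hr hz.
have [s [ss [muh [ch [dh [hmu hch hd]]]]]] := damped_cvg_subseq hr hz.
have hn' := rcvg_subseq ss hn; have sqs := subseq_idx_comp sq ss.
have hps := vcvg_subseq ss hp; have hets j := het (s j).
have dne0 j : damp (e (s j)) != 0 by rewrite gt_eqF ?damp_gt0.
case: (eqVneq muh 0) => [m0|m0].
- right; exists ch, dh; split.
  + apply: dAinf_of_cvg sqs hps hets (fun j => damp_gt0 _) _ (vcvg_damped_shadow hn' hd).
    by rewrite -m0.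
  + by apply: damped_limit_neq0 hd; rewrite -m0.
  + apply: vcvg_unique (vcvg_subseq ss hz) _; apply: vcvg_ext (vcvgZ hch hd) => j /=.
    by rewrite scalerA divfK.
  + apply: rcvg_unique (rcvg_subseq ss hr) _; rewrite -(mulr0 ch) -m0.
    by apply: rcvg_ext (rcvgM hch hmu) => j /=; rewrite divfK.
- left; exists (muh^-1 *: dh).
  have he : vcvg (e \o s) (muh^-1 *: dh).
    by apply: vcvg_ext (vcvgZ (rcvgV m0 hmu) hd) => j /=; rewrite scalerA mulVf ?scale1r.
  split; last exact: vcvg_unique (vcvg_subseq ss hz) (vcvgZ (rcvg_subseq ss hr) he).
  apply: dA_of_cvg sqs hps hets _; apply: vcvg_dist he _.
  by apply: rcvg_ext hn' => j; rewrite vnormB.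
Qed.

End OuterLimits.

Section ProxADC.
Context {R : realType} {n : nat} (P : cp1 R n) (M : adc_run R n (cp_m P)).
Local Notation m := (cp_m P).
Local Notation vec := 'rV[R]_n.

Hypothesis Hphi : forall p, is_obj P p -> convex_rfun (cp_phi P p).
Hypothesis HA1 : Assumption1 P.
Hypothesis HA2 : Assumption2 P (r_X M 0) (r_ahat M).
Hypothesis HA3 : Assumption3 P (r_ell M).
Hypothesis HA5 : Assumption5 P.
Hypothesis HA6 : Assumption6 P (r_sigma M) (r_lam M).
Hypothesis Hpar : method_params P M.
Hypothesis Hsig : sigma_def P M.
Hypothesis Hgen : generated P M.

(* [xcen k] is the prox center x^{k,i_k} = x^{k+1} and [xsol k] the last subproblem
   solution x^{k,i_k+1}, at which the multipliers of Y^k(x^{k+1}) live. *)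
Definition xcen k := r_xi M k (r_ik M k).
Definition xsol k := r_xi M k (r_ik M k).+1.
Definition ak k := r_a M k (r_ik M k).
Definition bk k := r_b M k (r_ik M k).
Definition Fu k p x := fup P (r_sigma M) k p (ak k p) (xcen k) x.
Definition Fw k p x := flo P k p (bk k p) (xcen k) x.
Definition fupk k p := Fu k p (xsol k).
Definition flok k p := Fw k p (xsol k).
Definition fval k p := fk P k p (xsol k).
Definition rho k := r_del M k / (r_lam M + r_ell M k).

Lemma lam_gt0 : 0 < r_lam M.
Proof. by case: Hpar. Qed.

Lemma eps_cvg0 : rcvg (r_eps M) 0.
Proof. by case: Hpar => _ [_ []]. Qed.

Lemma del_gt0 k : 0 < r_del M k.
Proof. by case: Hpar => _ [_ [_ [/(_ k) []]]]. Qed.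

Lemma del_cvg0 : rcvg (r_del M) 0.
Proof. by case: Hpar => _ [_ [_ [_ []]]]. Qed.

Lemma rho_cvg0 : rcvg rho 0.
Proof. by case: Hpar => _ [_ [_ [_ [_ []]]]]. Qed.

Lemma ell_gt0 k : 0 < r_ell M k.
Proof. by case: HA3 => h _; exact: h. Qed.

Lemma ell_rho_le_del k : r_ell M k * rho k <= r_del M k.
Proof.
have l0 := ell_gt0 k; have d0 := del_gt0 k; have lam0 := lam_gt0.
rewrite /rho mulrCA ger_pMr // ler_pdivrMr ?mul1r ?addr_gt0 //; lra.
Qed.

Lemma X_succ k : r_X M k.+1 = xcen k.
Proof. by case: Hgen => _ [->]. Qed.

Lemma valid_picks_at k : valid_picks P k (ak k) (bk k) (xcen k).
Proof. by case: Hgen => _ [_ [/(_ k (r_ik M k) (leqnn _)) []]]. Qed.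

Lemma sub_sol_at k : sub_sol P (r_sigma M) (r_lam M) k (ak k) (bk k) (xcen k) (xsol k).
Proof. by case: Hgen => _ [_ [/(_ k (r_ik M k) (leqnn _)) []]]. Qed.

Lemma fval_sigma_le_fupk k p : fval k p + r_sigma M p k <= fupk k p.
Proof.
have [ha _] := valid_picks_at k p; have := ha (xsol k).
by rewrite /fval /fupk /Fu /fup /fk; lra.
Qed.

Lemma fupk_le_fval k p : fupk k p <= fval k p + r_sigma M p k + r_eps M k.
Proof. by case: Hgen => _ [_ [_ [/(_ k) [h _] _]]]; exact: h. Qed.

Lemma flok_le_fval k p : flok k p <= fval k p.
Proof.
have [_ hb] := valid_picks_at k p; have := hb (xsol k).
by rewrite /fval /flok /Fw /flo /fk; lra.
Qed.

Lemma fval_le_flok k p : I2 P p -> fval k p - r_eps M k <= flok k p.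
Proof. by case: Hgen => _ [_ [_ [/(_ k) [_ [h _]] _]]]; exact: h. Qed.

Lemma fupk_le0 k p : ~~ is_obj P p -> fupk k p <= 0.
Proof. by have [h _] := sub_sol_at k; exact: h. Qed.

Lemma step_le_rho k : vnorm (xsol k - xcen k) <= rho k.
Proof. by case: Hgen => _ [_ [_ [/(_ k) [_ [_ h]] _]]]. Qed.

Lemma sigma_obj p k : is_obj P p -> r_sigma M p k = 0.
Proof.
move=> hp; have [h0 _] := HA2; apply: (rcvg_unique (Hsig p k)).
by apply: rcvg_ext (rcvg_cst 0) => N; rewrite big1 // => i _; exact: h0.
Qed.

(* sigma_p^k is the tail of a convergent series. *)
Lemma sigma_cvg0 p : rcvg (fun k => r_sigma M p k) 0.
Proof.
case hp: (is_obj P p); first by apply: rcvg_ext (rcvg_cst 0) => k; rewrite sigma_obj.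
have [_ /(_ p (negbT hp)) [_ [_ [S [hS _]]]]] := HA2.
pose c k := \sum_(0 <= k' < k) r_ahat M p k'.
have e k : r_sigma M p k = S - c k.
  have hc := rcvgD hS (rcvg_cst (- c k)).
  apply: (rcvg_unique (Hsig p k)) => e e0; have [K HK] := hc e e0.
  exists (maxn K k) => N; rewrite geq_max => /andP[/HK h kN].
  move: h; rewrite /c (@big_cat_nat _ _ _ k 0 N) //=.
  set A := \sum_(0 <= i < k) _; set B := \sum_(k <= i < N) _.
  by rewrite (_ : A + B - A = B) //; ring.
by rewrite -(subrr S); apply: rcvg_ext (rcvgD (rcvg_cst S) (rcvgN hS)) => k; rewrite e.
Qed.

Lemma Fu_csubdiff_g k p u :
  csubdiff (Fu k p) (xsol k) u -> csubdiff (cp_g P k p) (xsol k) (u + ak k p).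
Proof. by move=> hu z; have := hu z; rewrite /Fu /fup dotDl !dotBr; lra. Qed.

Lemma Fw_supdiff_h k p w :
  supdiff (Fw k p) (xsol k) w -> csubdiff (cp_h P k p) (xsol k) (bk k p - w).
Proof. by move=> hw z; have := hw z; rewrite /Fw /flo dotBl dotNl !dotBr; lra. Qed.

Lemma lipschitz_error_le k : r_ell M k * vnorm (xsol k - xcen k) + r_del M k <= 2 * r_del M k.
Proof.
have := ell_rho_le_del k; have := ler_wpM2l (ltW (ell_gt0 k)) (step_le_rho k); lra.
Qed.

Lemma Fu_subgrad_approx k p u : csubdiff (Fu k p) (xsol k) u ->
  exists pt et, [/\ pt = xcen k \/ pt = xsol k, dC_at k p pt et &
                    vnorm (u - et) <= 2 * r_del M k].
Proof.
move=> /Fu_csubdiff_g hg; have [ha _] := valid_picks_at k p.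
have d0 := del_gt0 k; have er := lipschitz_error_le k.
have [_ /(_ k (xsol k) (xcen k) p) [[hg1 _]|[_ hh2]]] := HA3.
- have [g2 [g2s g2n]] := hg1 _ hg _ d0.
  exists (xcen k), (g2 - ak k p); split; [by left | by exists g2, (ak k p) |].
  have -> : u - (g2 - ak k p) = u + ak k p - g2 by apply/rowP => i; rewrite !mxE; ring.
  by apply: le_trans er; apply: ltW.
- have [a2 [a2s a2n]] := hh2 _ ha _ d0.
  exists (xsol k), (u + ak k p - a2); split; [by right | by exists (u + ak k p), a2 |].
  have -> : u - (u + ak k p - a2) = - (ak k p - a2) by apply/rowP => i; rewrite !mxE; ring.
  by rewrite vnormN; apply: le_trans er; apply: ltW.
Qed.

Lemma Fw_supgrad_approx k p w : supdiff (Fw k p) (xsol k) w ->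
  exists pt et, [/\ pt = xcen k \/ pt = xsol k, dC_at k p pt et &
                    vnorm (w - et) <= 2 * r_del M k].
Proof.
move=> /Fw_supdiff_h hh; have [_ hb] := valid_picks_at k p.
have d0 := del_gt0 k; have er := lipschitz_error_le k.
have [_ /(_ k (xsol k) (xcen k) p) [[_ hg2]|[hh1 _]]] := HA3.
- have [g3 [g3s g3n]] := hg2 _ hb _ d0.
  exists (xsol k), (g3 - (bk k p - w)); split; [by right | by exists g3, (bk k p - w) |].
  have -> : w - (g3 - (bk k p - w)) = bk k p - g3 by apply/rowP => i; rewrite !mxE; ring.
  by apply: le_trans er; apply: ltW.
- have [h3 [h3s h3n]] := hh1 _ hh _ d0.
  exists (xcen k), (bk k p - h3); split; [by left | by exists (bk k p), h3 |].
  have -> : w - (bk k p - h3) = - ((bk k p - w) - h3) by apply/rowP => i; rewrite !mxE; ring.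
  by rewrite vnormN; apply: le_trans er; apply: ltW.
Qed.

Lemma xsol_cvg s xbar : subseq_idx s -> vcvg (xcen \o s) xbar -> vcvg (xsol \o s) xbar.
Proof.
move=> ss hx; apply: vcvg_dist hx _; apply: (rcvg_squeeze0 (rcvg_subseq ss rho_cvg0)).
by exists 0%N => j _; rewrite ger0_norm ?vnorm_ge0 //; exact: step_le_rho.
Qed.

Lemma dC_shadow q xbar (p : 'I_m) (e : nat -> vec) :
  subseq_idx q -> vcvg (xcen \o q) xbar -> vcvg (xsol \o q) xbar ->
  (forall j, exists pt et, [/\ pt = xcen (q j) \/ pt = xsol (q j), dC_at (q j) p pt et &
                              vnorm (e j - et) <= 2 * r_del M (q j)]) ->
  exists pts ets : nat -> vec, [/\ vcvg pts xbar, forall j, dC_at (q j) p (pts j) (ets j) &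
                                   rcvg (fun j => vnorm (e j - ets j)) 0].
Proof.
move=> sq hc hs /choice [pt /choice [et het]].
exists pt, et; split; [|by move=> j; case: (het j)|].
  by apply: vcvg_either hc hs _ => j; case: (het j).
apply: (rcvg_squeeze0 (v := fun j => 2 * r_del M (q j))).
  by rewrite -(mulr0 2); apply: rcvgM (rcvg_cst 2) (rcvg_subseq sq del_cvg0).
by exists 0%N => j _; rewrite ger0_norm ?vnorm_ge0 //; case: (het j).
Qed.

(* Lower epi-convergence keeps limits of the feasible solutions [xsol] feasible. *)
Lemma dom_all_of_cvg s xbar : subseq_idx s -> vcvg (xsol \o s) xbar -> dom_all P xbar.
Proof.
move=> ss hx p; rewrite /Fp; case hp: (is_obj P p); first by rewrite Phi_obj // ltey.
rewrite Phi_constr ?hp //; case: ifP => [_|hf]; first by rewrite ltey.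
exfalso; have f0 : 0 < cp_f P p xbar by rewrite ltNge hf.
have [_ [/(_ p xbar) [hepi _] _]] := HA1.
have [xs [hxs hxsq]] := vcvg_subseq_extend ss hx.
have [K HK] := hepi xs hxs (cp_f P p xbar / 2) (ltac:(rewrite lte_fin; lra)).
have hsig := sigma_cvg0 p; have [K2 HK2] := hsig (cp_f P p xbar / 2) ltac:(lra).
pose j := maxn K K2.
have hj1 : (K <= s j)%N by apply: leq_trans (subseq_idx_ge ss j); rewrite leq_max leqnn.
have hj2 : (K2 <= s j)%N by apply: leq_trans (subseq_idx_ge ss j); rewrite leq_max leqnn orbT.
have := HK _ hj1; rewrite hxsq lte_fin => h3.
have := HK2 _ hj2; rewrite subr0 ltr_norml => /andP[h4 _].
have := fval_sigma_le_fupk (s j) p; have := fupk_le0 (s j) (negbT hp).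
by rewrite /fval; lra.
Qed.

Lemma fval_bounded_along s xbar : subseq_idx s -> vcvg (xsol \o s) xbar ->
  forall p, exists B, forall j, `|fval (s j) p| <= B.
Proof.
move=> ss hx p; have [_ [_ [/(_ p xbar) hb _]]] := HA1.
have [[d1 [c1 [K1 [d10 h1]]]] [d2 [c2 [K2 [d20 h2]]]]] := hb.
have dm : 0 < Num.min d1 d2 by rewrite lt_min d10 d20.
have [K3 HK3] := hx _ dm.
apply: bounded_of_eventually_bounded; exists (maxn (maxn K1 K2) K3), (`|c1| + `|c2|) => j.
rewrite !geq_max => /andP[/andP[j1 j2] j3].
have := HK3 _ j3; rewrite lt_min => /andP[n1 n2].
have := h1 _ _ (leq_trans j1 (subseq_idx_ge ss j)) n1.
have := h2 _ _ (leq_trans j2 (subseq_idx_ge ss j)) n2; rewrite /fval => a1 a2.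
have := ler_norm c1; have := ler_norm c2; have := ler_norm (- c1); have := ler_norm (- c2).
by rewrite !normrN ler_norml => *; apply/andP; split; lra.
Qed.

Lemma fupk_flok_bounded_along s xbar : subseq_idx s -> vcvg (xsol \o s) xbar ->
  forall p, exists B, forall j, `|fupk (s j) p| <= B /\ (I2 P p -> `|flok (s j) p| <= B).
Proof.
move=> ss hx p; have [B1 h1] := fval_bounded_along ss hx p.
have [B2 h2] := rcvg_bounded (sigma_cvg0 p); have [B3 h3] := rcvg_bounded eps_cvg0.
exists (B1 + B2 + B3) => j; have := h1 j; have := h2 (s j); have := h3 (s j).
rewrite !ler_norml => /andP[? ?] /andP[? ?] /andP[? ?]; split.
  have := fval_sigma_le_fupk (s j) p; have := fupk_le_fval (s j) p.
  by move=> ? ?; apply/andP; split; lra.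
move=> hI2; have := flok_le_fval (s j) p; have := fval_le_flok (s j) hI2.
by move=> ? ?; apply/andP; split; lra.
Qed.

Lemma Yset_mult k y p : Yset P M k y ->
  esubdiff (phi_up (Phi P p)) (fupk k p) (y p).1 /\
  esubdiff (phi_down (Phi P p)) (flok k p) (y p).2.
Proof. by case=> /(_ p). Qed.

Lemma Yset_seq_choice s (ys : nat -> 'I_m -> R * R) : (forall j, Yset P M (s j) (ys j)) ->
  exists u w : nat -> 'I_m -> vec, forall j,
    (forall p, csubdiff (Fu (s j) p) (xsol (s j)) (u j p) /\
               supdiff (Fw (s j) p) (xsol (s j)) (w j p)) /\
    \sum_p ((ys j p).1 *: u j p + (ys j p).2 *: w j p) + r_lam M *: (xsol (s j) - xcen (s j)) = 0.
Proof.
move=> hY; have /choice [uw huw] : forall j, exists uw : ('I_m -> vec) * ('I_m -> vec),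
    (forall p, csubdiff (Fu (s j) p) (xsol (s j)) (uw.1 p) /\
               supdiff (Fw (s j) p) (xsol (s j)) (uw.2 p)) /\
    \sum_p ((ys j p).1 *: uw.1 p + (ys j p).2 *: uw.2 p) + r_lam M *: (xsol (s j) - xcen (s j)) = 0.
  by move=> j; have [_ [u [w h]]] := hY j; exists (u, w).
by exists (fun j => (uw j).1), (fun j => (uw j).2).
Qed.

Lemma Yset_mult_bound p (A : R) : 0 < A -> exists C, forall k y, Yset P M k y ->
  `|fupk k p| <= A -> (I2 P p -> `|flok k p| <= A) ->
  (is_obj P p -> `|(y p).1| <= C) /\ `|(y p).2| <= C.
Proof.
move=> A0; case hp: (is_obj P p); last first.
  exists 0 => k y /(Yset_mult p) [_ h2] _ _; split => //.
  by rewrite (esubdiff_phi_down_I1 (I1_constr (negbT hp)) h2) normr0.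
have [C [C0 hC]] := esubdiff_phi_updown_bounded hp (Hphi hp) A0.
exists C => k y /(Yset_mult p) [h1 h2] hu hl; split => [_|]; first exact: hC _ _ hu (or_introl h1).
case: (pselect (I1 P p)) => hI; first by rewrite (esubdiff_phi_down_I1 hI h2) normr0.
exact: hC _ _ (hl hI) (or_intror h2).
Qed.

Lemma Yset_mult_bounded_at k (ys : nat -> 'I_m -> R * R) : (forall j, Yset P M k (ys j)) ->
  forall p, exists C, forall j, (is_obj P p -> `|(ys j p).1| <= C) /\ `|(ys j p).2| <= C.
Proof.
move=> hY p; have A0 : 0 < `|fupk k p| + `|flok k p| + 1 by rewrite ltr_wpDl ?addr_ge0.
have [C hC] := Yset_mult_bound p A0; exists C => j.
have := normr_ge0 (fupk k p); have := normr_ge0 (flok k p).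
by move=> ? ?; apply: hC (hY j) _ _ => [|_]; lra.
Qed.

(* At a fixed k the subgradients live in fixed bounded sets, so normalized unbounded
   multipliers would converge to a nonzero multiplier violating Assumption 6. *)
Lemma Yset_bounded_at k : exists B, forall y, Yset P M k y -> ynorm y <= B.
Proof.
apply: contrapT => /not_bounded_seq [ys hys].
have [u [w huw]] := Yset_seq_choice (s := fun=> k) (fun j => (hys j).1).
have [s [ss tau_ge [yh [zh [hy hz hsum hnt]]]]] := normalized_multiplier_limits
  (fun j => (huw j).2) (fun=> lexx (vnorm (r_lam M *: (xsol k - xcen k)))) (fun j => (hys j).2).
have tau0 j : 0 < mult_scale ys u w (s j) by apply: lt_le_trans (tau_ge j); rewrite ltr0n.
have [y2h y1h] := normalized_mult_limit0 (Yset_mult_bounded_at (fun j => (hys j).1)) tau_ge hy.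
have hv p : exists v, csubdiff (Fu k p) (xsol k) v /\ zh p true = yh p true *: v.
  have [B hB] := csubdiff_vnorm_bounded (Fu k p) (xsol k).
  apply: (bounded_scaled_limit (e := fun j => u (s j) p)) (hy p true) (hz p true) => [es v|j|j].
  - exact: csubdiff_closed.
  - exact: ((huw _).1 p).1.
  - exact/hB/((huw _).1 p).1.
have z2h p : zh p false = 0.
  have [B hB] := supdiff_vnorm_bounded (Fw k p) (xsol k).
  have [v [_ ->]] := bounded_scaled_limit (e := fun j => w (s j) p) (@supdiff_closed _ _ _ _)
    (fun j => ((huw _).1 p).2) (fun j => hB _ ((huw _).1 p).2) (hy p false) (hz p false).
  by rewrite y2h scale0r.
have [v hv'] := choice hv.
have hnc p : ~~ is_obj P p -> ncone [set t | t <= 0] (fupk k p) (yh p true).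
  move=> hp; apply: ncone_le0_limit (rcvg_cst _) (hy p true) _ => j.
  apply: ncone_le0_scale; first by rewrite invr_gt0 tau0.
  exact: esubdiff_Phi_constr hp (Yset_mult p (hys _).1).1.
have y1c := HA6 (valid_picks_at k) (sub_sol_at k) hnc.
apply: hnt => p [|]; last by rewrite y2h z2h.
suff y0 : yh p true = 0 by rewrite (hv' p).2 y0 scale0r.
case hp: (is_obj P p); first exact: y1h.
apply: y1c; last by rewrite hp.
exists v; split => [q _|]; first exact: (hv' q).1.
have : \sum_q yh q true *: v q = 0.
  by rewrite -[RHS]hsum; apply: eq_bigr => q _; rewrite z2h addr0 (hv' q).2.
by rewrite (bigID (fun q => is_obj P q)) /= big1 ?add0r // => q hq; rewrite y1h ?scale0r.
Qed.

Lemma fupk_sub_fval_cvg0 q p : subseq_idx q -> rcvg (fun j => fupk (q j) p - fval (q j) p) 0.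
Proof.
move=> sq; apply: (rcvg_squeeze0 (v := fun j => `|r_sigma M p (q j)| + r_eps M (q j))).
  rewrite -[0]addr0 -{1}(normr0 R).
  exact: rcvgD (rcvg_norm (rcvg_subseq sq (sigma_cvg0 p))) (rcvg_subseq sq eps_cvg0).
exists 0%N => j _; have := fval_sigma_le_fupk (q j) p; have := fupk_le_fval (q j) p.
have := ler_norm (r_sigma M p (q j)); have := ler_norm (- r_sigma M p (q j)).
by rewrite normrN ler_norml => *; apply/andP; split; lra.
Qed.

Lemma Tset_ncone_limit p xbar q (y1 tau : nat -> R) y1h :
  subseq_idx q -> vcvg (xsol \o q) xbar -> (forall j, 0 < tau j) ->
  (forall j, esubdiff (phi_up (Phi P p)) (fupk (q j) p) (y1 j)) ->
  rcvg (fun j => y1 j / tau j) y1h -> (is_obj P p -> y1h = 0) ->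
  exists t, Tset P p xbar t /\ ncone (edom (Phi P p)) t y1h.
Proof.
move=> sq hx tau0 hy1 hy hobj; have [B hB] := fval_bounded_along sq hx p.
have [psi [spsi [th hth]]] := bounded_rseq_cvg_subseq hB.
have sqp := subseq_idx_comp sq spsi.
exists th; split.
  have [xs [hxs hq]] := vcvg_subseq_extend sqp (vcvg_subseq spsi hx).
  exists (q \o psi); split => //; exists xs; split => //.
  by apply: rcvg_ext hth => j /=; rewrite hq.
case hp: (is_obj P p); first by rewrite hobj //; apply: ncone0; exact: edom_Phi_obj.
have hpn : ~~ is_obj P p by rewrite hp.
have -> : edom (Phi P p) = [set t | t <= 0].
  by apply: funext => t; apply: propext; exact: edom_Phi_constr.
apply: (ncone_le0_limit (t := fun j => fupk (q (psi j)) p)) (rcvg_subseq spsi hy) _ => [|j].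
  rewrite -[th]addr0; apply: rcvg_ext (rcvgD hth (fupk_sub_fval_cvg0 p sqp)) => j.
  by rewrite addrC subrK.
by apply: ncone_le0_scale; [rewrite invr_gt0 | exact: esubdiff_Phi_constr hpn (hy1 _)].
Qed.

Lemma cq_alternative_of_limits p xbar q (y1 tau : nat -> R) (u : nat -> vec) y1h z1h :
  subseq_idx q -> vcvg (xcen \o q) xbar -> (forall j, 0 < tau j) ->
  (forall j, esubdiff (phi_up (Phi P p)) (fupk (q j) p) (y1 j)) ->
  (forall j, csubdiff (Fu (q j) p) (xsol (q j)) (u j)) ->
  rcvg (fun j => y1 j / tau j) y1h -> (is_obj P p -> y1h = 0) ->
  vcvg (fun j => (y1 j / tau j) *: u j) z1h ->
  exists y v, [/\ cq_alternative p xbar y v, z1h = y *: v & y = 0 -> y1h = 0].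
Proof.
move=> sq hc tau0 hy1 hu hy hobj hz; have hs := xsol_cvg sq hc.
have [pts [et [hpts het hn]]] := dC_shadow sq hc hs (fun j => Fu_subgrad_approx (hu j)).
case: (dC_limit_dichotomy sq hpts het hn hy hz) => [[v [hv ->]]|[c [d [hd d0 -> y0]]]].
- exists y1h, v; split => //; left; split; last exact: conv_hull_of_mem.
  exact: Tset_ncone_limit sq hs tau0 hy1 hy hobj.
- by exists c, d; split => //; right; split => //; exact/eqP.
Qed.

(* This is where the hypothesis on dAinf over I2 enters: Assumption 5 ignores phi_down. *)
Lemma down_products_limit0 p xbar q (y2 tau : nat -> R) (w : nat -> vec) z2h :
  subseq_idx q -> vcvg (xcen \o q) xbar ->
  (forall j, esubdiff (phi_down (Phi P p)) (flok (q j) p) (y2 j)) ->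
  (forall j, supdiff (Fw (q j) p) (xsol (q j)) (w j)) ->
  rcvg (fun j => y2 j / tau j) 0 -> (I2 P p -> dAinf P p xbar = [set 0]) ->
  vcvg (fun j => (y2 j / tau j) *: w j) z2h -> z2h = 0.
Proof.
move=> sq hc hy2 hw hy hdA hz; case: (pselect (I1 P p)) => hI.
  apply: vcvg_unique hz _; apply: vcvg_ext (vcvg_cst 0) => j.
  by rewrite (esubdiff_phi_down_I1 hI (hy2 j)) mul0r scale0r.
have hs := xsol_cvg sq hc.
have [pts [et [hpts het hn]]] := dC_shadow sq hc hs (fun j => Fw_supgrad_approx (hw j)).
case: (dC_limit_dichotomy sq hpts het hn hy hz) => [[v [_ ->]]|[c [d [hd /eqP d0 _ _]]]].
  by rewrite scale0r.
by move: hd; rewrite (hdA hI) => /d0.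
Qed.

Lemma Yset_mult_bounded_along s xbar p : subseq_idx s -> vcvg (xsol \o s) xbar ->
  forall ys : nat -> 'I_m -> R * R, (forall j, Yset P M (s j) (ys j)) ->
  exists C, forall j, (is_obj P p -> `|(ys j p).1| <= C) /\ `|(ys j p).2| <= C.
Proof.
move=> ss hs ys hY; have [B hB] := fupk_flok_bounded_along ss hs p.
have B0 : 0 <= B by apply: le_trans (hB 0%N).1; exact: normr_ge0.
have [C hC] := Yset_mult_bound p (ltr_wpDl B0 ltr01 : 0 < B + 1).
exists C => j; have [h1 h2] := hB j.
by apply: hC (hY j) _ _ => [|/h2]; lra.
Qed.

Lemma Yset_unbounded_along_false s xbar (ys : nat -> 'I_m -> R * R) :
  subseq_idx s -> vcvg (xcen \o s) xbar ->
  (dom_all P xbar -> forall p, I2 P p -> dAinf P p xbar = [set 0]) ->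
  (forall j, Yset P M (s j) (ys j)) -> (forall j, j.+1%:R < ynorm (ys j)) -> False.
Proof.
move=> ss hc hdA hY hn; have hs := xsol_cvg ss hc.
have hdom := dom_all_of_cvg ss hs; have {}hdA := hdA hdom.
have [u [w huw]] := Yset_seq_choice hY.
have [Bc hBc] : exists B, forall j, vnorm (r_lam M *: (xsol (s j) - xcen (s j))) <= B.
  have [B hB] := rcvg_bounded (rcvg_subseq ss rho_cvg0); exists (r_lam M * B) => j.
  rewrite vnormZ (gtr0_norm lam_gt0) ler_pM2l ?lam_gt0 //.
  exact: le_trans (step_le_rho _) (le_trans (ler_norm _) (hB j)).
have [phi [sphi tau_ge [yh [zh [hy hz hsum hnt]]]]] :=
  normalized_multiplier_limits (fun j => (huw j).2) hBc hn.
have sq := subseq_idx_comp ss sphi; have hcq := vcvg_subseq sphi hc.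
have tau0 j : 0 < mult_scale ys u w (phi j) by apply: lt_le_trans (tau_ge j); rewrite ltr0n.
have [y2h y1h] := normalized_mult_limit0
  (fun p => Yset_mult_bounded_along p ss hs hY) (fun j => tau_ge j) hy.
have z2h p : zh p false = 0.
  apply: (down_products_limit0 (p := p) sq hcq) (hdA p) (hz p false) => [j|j|].
  - exact: (Yset_mult p (hY _)).2.
  - exact: ((huw _).1 p).2.
  - by rewrite -(y2h p); exact: hy.
have /choice [yv hyv] p : exists yv : R * vec,
    cq_alternative p xbar yv.1 yv.2 /\ zh p true = yv.1 *: yv.2 /\ (yv.1 = 0 -> yh p true = 0).
  have [y [v [hv1 hv2 hv3]]] := cq_alternative_of_limits sq hcq tau0
    (fun j => (Yset_mult p (hY _)).1) (fun j => ((huw _).1 p).1) (hy p true) (y1h p) (hz p true).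
  by exists (y, v).
have y0 p : (yv p).1 = 0.
  apply: (@HA5 xbar hdom (fun q => (yv q).1) (fun q => (yv q).2) (fun q => (hyv q).1)).
  by rewrite -[RHS]hsum; apply: eq_bigr => q _; rewrite z2h addr0 (hyv q).2.1.
apply: hnt => p [|]; last by rewrite y2h z2h.
by have [_ [-> /(_ (y0 p)) ->]] := hyv p; rewrite y0 scale0r.
Qed.

Lemma Yset_bounded_along s : subseq_idx s ->
  (forall phi, subseq_idx phi -> exists psi xbar, [/\ subseq_idx psi,
     vcvg (fun j => r_X M (s (phi (psi j))).+1) xbar &
     dom_all P xbar -> forall p, I2 P p -> dAinf P p xbar = [set 0]]) ->
  exists B, forall j y, Yset P M (s j) y -> ynorm y <= B.
Proof.
move=> ss hsub; apply: contrapT => hn.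
have [jj [ys [sjj hys]]] := not_unif_bounded_subseq (fun j => Yset_bounded_at (s j)) hn.
have [psi [xbar [spsi hx hdA]]] := hsub jj sjj.
apply: (Yset_unbounded_along_false (s := s \o jj \o psi) (ys := ys \o psi)) hdA _ _.
- exact: subseq_idx_comp (subseq_idx_comp ss sjj) spsi.
- by apply: vcvg_ext hx => j; rewrite X_succ.
- by move=> j; exact: (hys _).1.
- move=> j; apply: le_lt_trans (hys _).2; rewrite ler_nat ltnS; exact: subseq_idx_ge.
Qed.

End ProxADC.

Unset Implicit Arguments.
Theorem proposition4p5 (R : realType) (n : nat) (P : cp1 R n) (M : adc_run R n (cp_m P))
  (Hm1 : (cp_m1 P <= cp_m P)%N)
  (Hphi : forall p, is_obj P p -> convex_rfun (cp_phi P p))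
  (HA1 : Assumption1 P)
  (HA2 : Assumption2 P (r_X M 0) (r_ahat M))
  (HA3 : Assumption3 P (r_ell M))
  (HA4 : Assumption4 P)
  (HA5 : Assumption5 P)
  (HA6 : Assumption6 P (r_sigma M) (r_lam M))
  (Hpar : method_params P M)
  (Hsig : sigma_def P M)
  (Hgen : generated P M) :
  (* (a) *)
  (forall (s : nat -> nat) (xbar : 'rV[R]_n),
     subseq_idx s ->
     vcvg (fun j => r_X M (s j).+1) xbar ->
     (forall p, I2 P p -> dAinf P p xbar = [set 0]) ->
     exists B : R, forall j y, Yset P M (s j) y -> ynorm y <= B) /\
  (* (b) *)
  ((exists B : R, forall k, vnorm (r_X M k) <= B) ->
   (forall x, dom_all P x -> forall p, I2 P p -> dAinf P p x = [set 0]) ->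
   exists D : R, forall k y, Yset P M k y -> ynorm y <= D).
Proof.
have bounded_along := Yset_bounded_along Hphi HA1 HA2 HA3 HA5 HA6 Hpar Hsig Hgen.
split.
- move=> s xbar ss hx hI2; apply: bounded_along ss _ => phi sphi.
  by exists id, xbar; split => //; exact: vcvg_subseq sphi hx.
- move=> [B hB] hI2.
  have [D hD] : exists D, forall j y, Yset P M (id j) y -> ynorm y <= D.
    apply: bounded_along (fun j => ltnSn j) _ => phi _.
    have [psi [spsi [xbar hx]]] :=
      bounded_vseq_cvg_subseq (v := fun j => r_X M (phi j).+1) (fun j => hB _).
    by exists psi, xbar; split => //; exact: hI2.
  by exists D.
Qed.
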